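(* Let $\mathcal R=(\Delta^*,\Theta)$ be a word rewriting system with $\Delta=\{0,1\}$, let $\Sigma_{\mathcal R}=\Sigma_\Theta\cup\Sigma_{LR}$ be the set of tgds over schema $\{E,L,R\}$ defined below, and let $w_0\in\Delta^*$. Then the core chase sequence with $\Sigma_{\mathcal R}$ starting from $I_{w_0}$ is infinite if and only if there is an infinite derivation $w_0\rightarrow_{\mathcal R}w_1\rightarrow_{\mathcal R}w_2\rightarrow_{\mathcal R}\cdots$.
   Context: Word rewriting: $\Theta$ is a finite subset of $\Delta^*\times\Delta^*$; $u\rightarrow_{\mathcal R}v$ iff $u=x\ell y$, $v=xry$ for some $(\ell,r)\in\Theta$ and $x,y\in\Delta^*$. For $w=a_1\dots a_n\in\Delta^*$, $I_w=\{E(x_0,a_1,x_1),\dots,E(x_{n-1},a_n,x_n)\}$ with pairwise distinct nulls $x_i$. Schema: $E$ ternary, $L,R$ binary; $0,1$ are constants. $\Sigma_\Theta$ contains, for each $\rho=(a_1\dots a_n,b_1\dots b_m)\in\Theta$, the tgd $E(x_0,a_1,x_1),\dots,E(x_{n-1},a_n,x_n)\rightarrow\exists y_0\dots y_m\,L(x_0,y_0),E(y_0,b_1,y_1),\dots,E(y_{m-1},b_m,y_m),R(x_n,y_m)$. $\Sigma_{LR}$ consists of, for $c\in\{0,1\}$: $E(x_0,c,x_1),L(x_1,y_1)\rightarrow\exists y_0\,L(x_0,y_0),E(y_0,c,y_1)$ and $R(x_0,z_0),E(x_0,c,x_1)\rightarrow\exists z_1\,E(z_0,c,z_1),R(x_1,z_1)$.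 Chase: a trigger for tgd $\alpha\rightarrow\exists\bar z\beta$ on instance $I$ is a mapping $h$ (identity on constants) with $h(\alpha)\subseteq I$, active if no extension $h'$ has $h'(\beta)\subseteq I$. The core chase from $I$ repeatedly fires all active triggers in parallel (each adding $h'(\beta)$ with fresh nulls for existential variables), takes the union and replaces it by its core (minimal subinstance to which the instance maps by an endomorphism); it stops when no active trigger remains. *)

From Stdlib Require Import List Arith.
Import ListNotations.

(** * Words and word rewriting over Delta = {0,1} (encoded as bool: false = 0, true = 1) *)

Definition word := list bool.
Definition rws := list (word * word).

Definition rstep (Theta : rws) (u v : word) : Prop :=
  exists x y l r, In (l, r) Theta /\ u = x ++ l ++ y /\ v = x ++ r ++ y.

Definition infinite_derivation (Theta : rws) (w0 : word) : Prop :=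
  exists f : nat -> word, f 0 = w0 /\ forall n, rstep Theta (f n) (f (S n)).

Inductive term : Type :=
| Const (b : bool)
| Null (n : nat).

Inductive vterm : Type :=
| VC (b : bool)
| VV (n : nat).

Inductive atom (T : Type) : Type :=
| AE (t1 t2 t3 : T)
| AL (t1 t2 : T)
| AR (t1 t2 : T).
Arguments AE {T}. Arguments AL {T}. Arguments AR {T}.

Definition amap {T U : Type} (f : T -> U) (a : atom T) : atom U :=
  match a with
  | AE t1 t2 t3 => AE (f t1) (f t2) (f t3)
  | AL t1 t2 => AL (f t1) (f t2)
  | AR t1 t2 => AR (f t1) (f t2)
  end.

Definition atom_args {T : Type} (a : atom T) : list T :=
  match a with
  | AE t1 t2 t3 => [t1; t2; t3]
  | AL t1 t2 => [t1; t2]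
  | AR t1 t2 => [t1; t2]
  end.

(** An instance is a finite set of atoms, represented by a list
    (order and duplicates are irrelevant: only membership is used). *)
Definition instance := list (atom term).

Definition occurs (t : term) (I : instance) : Prop :=
  exists a, In a I /\ In t (atom_args a).

(** I_w for w = a_1 ... a_n : E(x_0,a_1,x_1), ..., E(x_{n-1},a_n,x_n), x_i = Null i. *)
Fixpoint I_word_from (k : nat) (w : word) : instance :=
  match w with
  | [] => []
  | a :: w' => AE (Null k) (Const a) (Null (S k)) :: I_word_from (S k) w'
  end.
Definition I_word (w : word) : instance := I_word_from 0 w.

(** A tgd body -> exists zbar. head; universal variables are those of the body,
    existential variables are the variables of the head not occurring in the body. *)
Definition tgd := (list (atom vterm) * list (atom vterm))%type.
Definition body (s : tgd) := fst s.
Definition head (s : tgd) := snd s.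

Definition vvars (t : vterm) : list nat :=
  match t with VC _ => [] | VV n => [n] end.
Definition atoms_vars (l : list (atom vterm)) : list nat :=
  flat_map (fun a => flat_map vvars (atom_args a)) l.
Definition body_vars (s : tgd) := atoms_vars (body s).
Definition is_evar (s : tgd) (x : nat) : Prop :=
  In x (atoms_vars (head s)) /\ ~ In x (body_vars s).

Definition vsub (h : nat -> term) (t : vterm) : term :=
  match t with VC b => Const b | VV n => h n end.
Definition asub (h : nat -> term) (a : atom vterm) : atom term := amap (vsub h) a.

Definition agree_on (xs : list nat) (h h' : nat -> term) : Prop :=
  forall x, In x xs -> h x = h' x.

Definition trigger (Sigma : list tgd) (I : instance) (s : tgd) (h : nat -> term) : Prop :=
  In s Sigma /\ forall a, In a (body s) -> In (asub h a) I.

Definition active (I : instance) (s : tgd) (h : nat -> term) : Prop :=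
  ~ exists h', agree_on (body_vars s) h h' /\ forall a, In a (head s) -> In (asub h' a) I.

Definition dflt_trig : tgd * (nat -> term) := (([], []), fun _ => Null 0).

(** Parallel firing of all active triggers: J is the union of I with h'(head)
    for one representative of every active trigger, where existential variables
    are sent to pairwise distinct fresh nulls. *)
Definition par_step (Sigma : list tgd) (I J : instance) : Prop :=
  exists ts : list (tgd * (nat -> term)),
    let s_ i := fst (nth i ts dflt_trig) in
    let h_ i := snd (nth i ts dflt_trig) in
    (forall p, In p ts -> trigger Sigma I (fst p) (snd p) /\ active I (fst p) (snd p)) /\
    (forall s h, trigger Sigma I s h -> active I s h ->
       exists h', In (s, h') ts /\ agree_on (body_vars s) h h') /\
    (forall i j, i < length ts -> j < length ts -> s_ i = s_ j ->
       agree_on (body_vars (s_ i)) (h_ i) (h_ j) -> i = j) /\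
    (forall i x, i < length ts -> is_evar (s_ i) x ->
       exists n, h_ i x = Null n /\ ~ occurs (Null n) I) /\
    (forall i j x y, i < length ts -> j < length ts ->
       is_evar (s_ i) x -> is_evar (s_ j) y -> h_ i x = h_ j y -> i = j /\ x = y) /\
    J = I ++ flat_map (fun p => map (asub (snd p)) (head (fst p))) ts.

Definition subinstance (K J : instance) : Prop := incl K J.

Definition hom_into (h : term -> term) (J K : instance) : Prop :=
  (forall b, h (Const b) = Const b) /\ forall a, In a J -> In (amap h a) K.

Definition retracts_to (J K : instance) : Prop :=
  subinstance K J /\ exists h, hom_into h J K.

Definition is_core_of (K J : instance) : Prop :=
  retracts_to J K /\ forall K', subinstance K' K -> retracts_to J K' -> incl K K'.

Definition has_active_trigger (Sigma : list tgd) (I : instance) : Prop :=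
  exists s h, trigger Sigma I s h /\ active I s h.

Definition core_chase_step (Sigma : list tgd) (I K : instance) : Prop :=
  has_active_trigger Sigma I /\ exists J, par_step Sigma I J /\ is_core_of K J.

Definition core_chase_infinite (Sigma : list tgd) (I0 : instance) : Prop :=
  exists f : nat -> instance, f 0 = I0 /\ forall n, core_chase_step Sigma (f n) (f (S n)).

(** For a rule (a_1..a_n, b_1..b_m): x_i = VV i (0 <= i <= n), y_j = VV (n+1+j). *)
Fixpoint path_atoms (start : nat) (w : word) : list (atom vterm) :=
  match w with
  | [] => []
  | a :: w' => AE (VV start) (VC a) (VV (S start)) :: path_atoms (S start) w'
  end.

Definition rule_tgd (rho : word * word) : tgd :=
  let (l, r) := rho in
  let n := length l in
  let m := length r in
  (path_atoms 0 l,
   AL (VV 0) (VV (S n)) :: path_atoms (S n) r ++ [AR (VV n) (VV (S n + m))]).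

Definition Sigma_Theta (Theta : rws) : list tgd := map rule_tgd Theta.

(** E(x0,c,x1), L(x1,y1) -> exists y0. L(x0,y0), E(y0,c,y1)
    with x0 = 0, x1 = 1, y1 = 2, y0 = 3. *)
Definition tgd_L (c : bool) : tgd :=
  ([AE (VV 0) (VC c) (VV 1); AL (VV 1) (VV 2)],
   [AL (VV 0) (VV 3); AE (VV 3) (VC c) (VV 2)]).

(** R(x0,z0), E(x0,c,x1) -> exists z1. E(z0,c,z1), R(x1,z1)
    with x0 = 0, z0 = 1, x1 = 2, z1 = 3. *)
Definition tgd_R (c : bool) : tgd :=
  ([AR (VV 0) (VV 1); AE (VV 0) (VC c) (VV 2)],
   [AE (VV 1) (VC c) (VV 3); AR (VV 2) (VV 3)]).

Definition Sigma_LR : list tgd := [tgd_L false; tgd_L true; tgd_R false; tgd_R true].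

Definition Sigma_R (Theta : rws) : list tgd := Sigma_Theta Theta ++ Sigma_LR.

From Stdlib Require Import List Arith Lia Classical ClassicalEpsilon Cantor.
From Pilot Require Import Defs.
Import ListNotations.

(** If [w0] has an infinite derivation, the chase never stops.  Every instance it
    produces receives [I_w0] and is graded: [E]-atoms stay within a grade, while [L]-
    and [R]-atoms climb one grade.  In a model of [Sigma_R], a path spelling [u] moves
    along a rewriting step [u -> v] to a path spelling [v] whose start is an
    [L]-successor of the old start; along an infinite derivation these starts have
    unbounded grades, so no finite graded instance is a model.

    Conversely, if all derivations from [w0] are shorter than some [N] (König's lemma),
    the tree of all derivations, with a null for each position of each derived word,
    is a finite model of [Sigma_R] receiving [I_w0].  Built in stages that mimic the
    parallel chase steps, it also maps into the chase.  So a chase instance maps to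
    itself through the model; it is a core, hence this endomorphism is invertible and
    transports the witnesses of the model back: the chase stops. *)

Definition term_eq_dec : forall t u : term, {t = u} + {t <> u}.
Proof. decide equality; [apply Bool.bool_dec | apply Nat.eq_dec]. Defined.

Definition atom_eq_dec {T} (d : forall t u : T, {t = u} + {t <> u}) :
  forall a b : atom T, {a = b} + {a <> b}.
Proof. decide equality. Defined.

Lemma in_list_max x l : In x l -> x <= list_max l.
Proof.
  intros H. pose proof (proj1 (list_max_le l (list_max l)) (le_n _)) as HF.
  rewrite Forall_forall in HF. auto.
Qed.

Definition avars (a : atom vterm) : list nat := flat_map vvars (atom_args a).

Lemma amap_comp {A B C} (f : A -> B) (g : B -> C) a :
  amap g (amap f a) = amap (fun x => g (f x)) a.
Proof. destruct a; reflexivity. Qed.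

Lemma amap_id {A} (a : atom A) : amap (fun x => x) a = a.
Proof. destruct a; reflexivity. Qed.

Lemma amap_ext_args (g g' : term -> term) a :
  (forall u, In u (atom_args a) -> g u = g' u) -> amap g a = amap g' a.
Proof. intros H; destruct a; simpl in *; rewrite ?H by tauto; reflexivity. Qed.

Lemma amap_asub (g : term -> term) h a :
  (forall b, g (Const b) = Const b) ->
  amap g (asub h a) = asub (fun x => g (h x)) a.
Proof.
  intros Hc. unfold asub. rewrite amap_comp. destruct a; simpl;
  repeat match goal with t : vterm |- _ => destruct t end; simpl; rewrite ?Hc; reflexivity.
Qed.

Lemma asub_ext h h' a : (forall x, In x (avars a) -> h x = h' x) -> asub h a = asub h' a.
Proof.
  unfold avars, asub; intros H; destruct a; simpl in *;
  repeat match goal with t : vterm |- _ => destruct t end; simpl in *;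
  repeat rewrite H by (repeat rewrite in_app_iff; simpl; tauto); reflexivity.
Qed.

Lemma avars_args h a x : In x (avars a) -> In (h x) (atom_args (asub h a)).
Proof.
  unfold avars, asub; destruct a; simpl;
  repeat match goal with t : vterm |- _ => destruct t end; simpl; intuition congruence.
Qed.

Lemma body_vars_In s x : In x (body_vars s) -> exists a, In a (body s) /\ In x (avars a).
Proof. unfold body_vars, atoms_vars. intros H. apply in_flat_map in H. exact H. Qed.

Lemma head_var_cases s a x : In a (Defs.head s) -> In x (avars a) ->
  In x (body_vars s) \/ is_evar s x.
Proof.
  intros Ha Hx. destruct (classic (In x (body_vars s))); auto.
  right. split; auto. unfold atoms_vars. apply in_flat_map. eauto.
Qed.

Lemma hom_comp g g' I J K : hom_into g I J -> hom_into g' J K ->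
  hom_into (fun t => g' (g t)) I K.
Proof.
  intros [Hc Ha] [Hc' Ha']. split.
  - intros b. rewrite Hc, Hc'. auto.
  - intros a Hin. rewrite <- amap_comp. apply Ha'. apply Ha. auto.
Qed.

Lemma hom_incl g I I' K : incl I I' -> hom_into g I' K -> hom_into g I K.
Proof. intros Hi [Hc Ha]. split; auto. Qed.

Lemma hom_id I K : incl I K -> hom_into (fun t => t) I K.
Proof. intros Hi. split; auto. intros a Ha. rewrite amap_id. auto. Qed.

(** [patch P F g] behaves as [g], except on a term [u] tagged by some (unique)
    [p] with [P u p], where it returns [F p]. *)
Definition patch {A R : Type} (P : term -> A -> Prop) (F : A -> R) (g : term -> R)
    (u : term) : R :=
  match excluded_middle_informative (exists p, P u p) with
  | left H => F (proj1_sig (constructive_indefinite_description _ H))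
  | right _ => g u
  end.

Lemma patch_out {A R} P (F : A -> R) g u : ~ (exists p, P u p) -> patch P F g u = g u.
Proof. intros H. unfold patch. destruct (excluded_middle_informative _); tauto. Qed.

Lemma patch_in {A R} (P : term -> A -> Prop) (F : A -> R) g u p :
  (forall p', P u p' -> p' = p) -> P u p -> patch P F g u = F p.
Proof.
  intros Hu Hp. unfold patch. destruct (excluded_middle_informative _) as [H|H].
  - f_equal. apply Hu. exact (proj2_sig (constructive_indefinite_description _ H)).
  - exfalso; eauto.
Qed.

(** * The core chase *)

Definition satisfied (I : instance) (s : tgd) (h : nat -> term) : Prop :=
  exists h', agree_on (body_vars s) h h' /\ forall a, In a (Defs.head s) -> In (asub h' a) I.

Definition is_model (Sigma : list tgd) (U : instance) : Prop :=
  forall s h, trigger Sigma U s h -> satisfied U s h.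

Definition fired (ts : list (tgd * (nat -> term))) : instance :=
  flat_map (fun p => map (asub (snd p)) (Defs.head (fst p))) ts.

Definition tS (ts : list (tgd * (nat -> term))) i := fst (nth i ts dflt_trig).
Definition tH (ts : list (tgd * (nat -> term))) i := snd (nth i ts dflt_trig).

Definition parallel_firing (Sigma : list tgd) (I : instance) ts : Prop :=
  (forall p, In p ts -> trigger Sigma I (fst p) (snd p) /\ active I (fst p) (snd p)) /\
  (forall s h, trigger Sigma I s h -> active I s h ->
     exists h', In (s, h') ts /\ agree_on (body_vars s) h h') /\
  (forall i j, i < length ts -> j < length ts -> tS ts i = tS ts j ->
     agree_on (body_vars (tS ts i)) (tH ts i) (tH ts j) -> i = j) /\
  (forall i x, i < length ts -> is_evar (tS ts i) x ->
     exists n, tH ts i x = Null n /\ ~ occurs (Null n) I) /\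
  (forall i j x y, i < length ts -> j < length ts ->
     is_evar (tS ts i) x -> is_evar (tS ts j) y -> tH ts i x = tH ts j y -> i = j /\ x = y).

Lemma par_step_iff Sigma I J :
  par_step Sigma I J <-> exists ts, parallel_firing Sigma I ts /\ J = I ++ fired ts.
Proof.
  split.
  - intros [ts [H1 [H2 [H3 [H4 [H5 ->]]]]]]. exists ts.
    split; [exact (conj H1 (conj H2 (conj H3 (conj H4 H5)))) | reflexivity].
  - intros [ts [[H1 [H2 [H3 [H4 H5]]]] ->]]. exists ts.
    exact (conj H1 (conj H2 (conj H3 (conj H4 (conj H5 eq_refl))))).
Qed.

Definition fresh_tag (ts : list (tgd * (nat -> term))) (u : term) (p : nat * nat) : Prop :=
  fst p < length ts /\ is_evar (tS ts (fst p)) (snd p) /\ tH ts (fst p) (snd p) = u.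

Section Chase.

Variable Sigma : list tgd.

Lemma trigger_occurs I s h x :
  trigger Sigma I s h -> In x (body_vars s) -> occurs (h x) I.
Proof.
  intros [_ Hb] Hx. apply body_vars_In in Hx as [a [Ha Hx]].
  exists (asub h a). split; auto. apply avars_args; auto.
Qed.

Lemma trigger_hom I K s h g : trigger Sigma I s h -> hom_into g I K ->
  trigger Sigma K s (fun x => g (h x)).
Proof.
  intros [Hs Hb] [Hc Ha]. split; auto. intros a Hin.
  rewrite <- amap_asub by auto. apply Ha. auto.
Qed.

Lemma trigger_agree I s h k :
  agree_on (body_vars s) h k -> trigger Sigma I s h -> trigger Sigma I s k.
Proof.
  intros Hag [Hs Hb]. split; auto. intros a Ha. rewrite <- (asub_ext h); auto.
  intros x Hx. apply Hag. unfold body_vars, atoms_vars. apply in_flat_map. eauto.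
Qed.

Lemma active_agree I s h k : agree_on (body_vars s) h k -> active I s h -> active I s k.
Proof.
  intros Hag Hact [h' [Hag' Hh']]. apply Hact. exists h'. split; auto.
  intros x Hx. rewrite Hag; auto.
Qed.

Lemma model_of_no_active_trigger I : ~ has_active_trigger Sigma I -> is_model Sigma I.
Proof.
  intros Hna s h Htr. apply NNPP. intros Hno. apply Hna. exists s, h. auto.
Qed.

Section Firing.

Variables (I : instance) (ts : list (tgd * (nat -> term))).
Hypothesis Hts : parallel_firing Sigma I ts.

Lemma firing_trigger i : i < length ts -> trigger Sigma I (tS ts i) (tH ts i).
Proof. intros Hi. apply (proj1 Hts). apply nth_In. auto. Qed.

Lemma fresh_tag_unique u p p' : fresh_tag ts u p -> fresh_tag ts u p' -> p' = p.
Proof.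
  destruct p as [i x], p' as [j y]. intros [Hi [Hx Hu]] [Hj [Hy Hu']]. simpl in *.
  destruct Hts as [_ [_ [_ [_ H5]]]].
  destruct (H5 j i y x) as [-> ->]; congruence.
Qed.

Lemma fresh_tag_not_occurs u : occurs u I -> ~ exists p, fresh_tag ts u p.
Proof.
  intros Hu [[i x] [Hi [Hx Heq]]]. simpl in *. destruct Hts as [_ [_ [_ [H4 _]]]].
  destruct (H4 i x Hi Hx) as [n [Hn Hno]]. apply Hno. rewrite <- Hn, Heq. auto.
Qed.

Lemma fresh_tag_not_const b : ~ exists p, fresh_tag ts (Const b) p.
Proof.
  intros [[i x] [Hi [Hx Heq]]]. simpl in *. destruct Hts as [_ [_ [_ [H4 _]]]].
  destruct (H4 i x Hi Hx) as [n [Hn _]]. congruence.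
Qed.

Lemma fired_In a : In a (fired ts) ->
  exists i b, i < length ts /\ In b (Defs.head (tS ts i)) /\ a = asub (tH ts i) b.
Proof.
  intros Ha. apply in_flat_map in Ha as [p [Hp Ha]].
  apply In_nth with (d := dflt_trig) in Hp as [i [Hi <-]].
  apply in_map_iff in Ha as [b [<- Hb]]. exists i, b. auto.
Qed.

End Firing.

Lemma par_step_incl I J : par_step Sigma I J -> incl I J.
Proof. intros HP. apply par_step_iff in HP as [ts [_ ->]]. intros a Ha. apply in_app_iff; auto. Qed.

Lemma par_step_satisfied I J s h : par_step Sigma I J -> trigger Sigma I s h ->
  satisfied J s h.
Proof.
  intros HP Ht. destruct (classic (active I s h)) as [Hact | Hna].
  - apply par_step_iff in HP as [ts [[_ [H2 _]] ->]].
    destruct (H2 s h Ht Hact) as [k [Hin Hag]]. exists k. split; auto.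
    intros a Ha. apply in_app_iff. right. apply in_flat_map.
    exists (s, k). split; auto. apply in_map. auto.
  - apply NNPP in Hna. destruct Hna as [k [Hag Hh]].
    exists k. split; auto. intros a Ha. apply (par_step_incl _ _ HP). auto.
Qed.

Lemma core_chase_step_hom I K : core_chase_step Sigma I K -> exists r, hom_into r I K.
Proof.
  intros [_ [J [HP [[Hsub [r Hr]] _]]]]. exists r.
  eapply hom_incl; [apply (par_step_incl _ _ HP) | exact Hr].
Qed.

Lemma satisfied_choice {A : Type} (U : instance) (Q : A -> Prop) (F : A -> tgd)
    (H : A -> nat -> term) :
  (forall i, Q i -> satisfied U (F i) (H i)) ->
  exists K : A -> nat -> term, forall i, Q i ->
    agree_on (body_vars (F i)) (H i) (K i) /\
    forall b, In b (Defs.head (F i)) -> In (asub (K i) b) U.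
Proof.
  intros HS. exists (fun i => epsilon (inhabits (fun _ : nat => Null 0))
    (fun k => agree_on (body_vars (F i)) (H i) k /\
              forall b, In b (Defs.head (F i)) -> In (asub k b) U)).
  intros i Hi. apply epsilon_spec. apply HS. exact Hi.
Qed.

Lemma par_step_hom_into_model I J U a :
  is_model Sigma U -> hom_into a I U -> par_step Sigma I J -> exists a', hom_into a' J U.
Proof.
  intros HU [Hac Haa] HP. apply par_step_iff in HP as [ts [Hts ->]].
  destruct (satisfied_choice U (fun i => i < length ts) (tS ts) (fun i x => a (tH ts i x)))
    as [K HK].
  { intros i Hi. apply HU. apply trigger_hom with I; [apply firing_trigger|split]; auto. }
  set (a' := patch (fresh_tag ts) (fun p => K (fst p) (snd p)) a).
  assert (Ha'I : forall u, occurs u I -> a' u = a u).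
  { intros u Hu. apply patch_out. apply (fresh_tag_not_occurs I); auto. }
  assert (Ha'c : forall b, a' (Const b) = Const b).
  { intros b. unfold a'. rewrite patch_out; auto. apply (fresh_tag_not_const I); auto. }
  exists a'. split; [exact Ha'c|].
  intros A HA. apply in_app_iff in HA as [HA | HA].
  - rewrite (amap_ext_args _ a); auto. intros u Hu. apply Ha'I. exists A; auto.
  - apply (fired_In ts) in HA as [i [b [Hi [Hb ->]]]].
    rewrite amap_asub by exact Ha'c.
    rewrite (asub_ext _ (K i)); [apply (HK i Hi); auto|].
    intros x Hx. destruct (head_var_cases _ _ _ Hb Hx) as [Hbv | Hev].
    + rewrite Ha'I by (eapply trigger_occurs; [apply (firing_trigger I ts) | ]; eauto).
      apply (HK i Hi). auto.
    + unfold a'. rewrite (patch_in _ _ _ _ (i, x)); auto.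
      * intros p' Hp'. eapply (fresh_tag_unique I); eauto. split; auto.
      * split; auto.
Qed.

Lemma chase_hom_into_model f U a0 :
  is_model Sigma U -> hom_into a0 (f 0) U ->
  (forall n, core_chase_step Sigma (f n) (f (S n))) ->
  forall n, exists a, hom_into a (f n) U.
Proof.
  intros HU H0 Hst n. induction n as [|n [a Ha]]; eauto.
  destruct (Hst n) as [_ [J [HP [[Hsub _] _]]]].
  destruct (par_step_hom_into_model _ _ _ _ HU Ha HP) as [a' Ha'].
  exists a'. eapply hom_incl; eauto.
Qed.

(** Stage [L] of a planned chase from [U0]: the planned firing [t], of [ss t] under
    [hh t], takes place at stage [lv t]. *)
Definition stage {T : Type} (U0 : instance) (tk : list T) (lv : T -> nat) (ss : T -> tgd)
    (hh : T -> nat -> term) (L : nat) : instance :=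
  U0 ++ flat_map (fun t => map (asub (hh t)) (Defs.head (ss t)))
                 (filter (fun t => lv t <=? L) tk).

Definition staged_firings {T : Type} U0 (tk : list T) lv ss hh : Prop :=
  (forall t, In t tk -> In (ss t) Sigma /\ 1 <= lv t /\
     forall a, In a (body (ss t)) -> In (asub (hh t) a) (stage U0 tk lv ss hh (pred (lv t)))) /\
  (forall t x, In t tk -> is_evar (ss t) x ->
     (exists n, hh t x = Null n) /\ ~ occurs (hh t x) (stage U0 tk lv ss hh (pred (lv t)))) /\
  (forall t t' x y, In t tk -> In t' tk -> is_evar (ss t) x -> is_evar (ss t') y ->
     hh t x = hh t' y -> t = t' /\ x = y).

Lemma stage_In {T : Type} U0 (tk : list T) lv ss hh L A :
  In A (stage U0 tk lv ss hh L) <-> In A U0 \/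
  exists t b, In t tk /\ lv t <= L /\ In b (Defs.head (ss t)) /\ A = asub (hh t) b.
Proof.
  unfold stage. rewrite in_app_iff, in_flat_map. apply or_iff_compat_l. split.
  - intros [t [Ht HA]]. apply filter_In in Ht as [Ht Hl]. apply Nat.leb_le in Hl.
    apply in_map_iff in HA as [b [<- Hb]]. exists t, b. auto.
  - intros [t [b [Ht [Hl [Hb ->]]]]]. exists t. split.
    + apply filter_In. split; auto. apply Nat.leb_le. auto.
    + apply in_map. auto.
Qed.

Lemma stage_succ_In {T : Type} U0 (tk : list T) lv ss hh L A :
  In A (stage U0 tk lv ss hh (S L)) -> In A (stage U0 tk lv ss hh L) \/
  exists t b, In t tk /\ lv t = S L /\ In b (Defs.head (ss t)) /\ A = asub (hh t) b.
Proof.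
  rewrite !stage_In. intros [H|[t [b [Ht [Hl [Hb ->]]]]]]; auto.
  destruct (Nat.eq_dec (lv t) (S L)).
  - right. exists t, b. auto.
  - left. right. exists t, b. repeat split; auto. lia.
Qed.

Section Staged.

Variables (T : Type) (U0 : instance) (tk : list T) (lv : T -> nat) (ss : T -> tgd)
  (hh : T -> nat -> term).
Hypothesis Htk : staged_firings U0 tk lv ss hh.

Let stg := stage U0 tk lv ss hh.

Lemma staged_trigger t L : In t tk -> lv t = S L -> trigger Sigma (stg L) (ss t) (hh t).
Proof.
  intros Ht Hl. destruct Htk as [Hb _]. destruct (Hb t Ht) as [Hs [_ Hbo]].
  split; auto. intros a Ha. specialize (Hbo a Ha). rewrite Hl in Hbo. exact Hbo.
Qed.

(** The planned firings of stage [L + 1] are triggers on the image of stage [L], hence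
    satisfied after the next parallel step; their fresh nulls go to the witnesses. *)
Lemma stage_succ_hom f L g :
  core_chase_step Sigma (f L) (f (S L)) -> hom_into g (stg L) (f L) ->
  exists g', hom_into g' (stg (S L)) (f (S L)).
Proof.
  destruct Htk as [Hb [Hev Huq]]. intros Hst Hg.
  destruct Hst as [_ [J [HP [[Hsub [r Hr]] _]]]].
  destruct (satisfied_choice J (fun t => In t tk /\ lv t = S L) ss (fun t x => g (hh t x)))
    as [K HK].
  { intros t [Ht Hl]. apply (par_step_satisfied _ _ _ _ HP). eapply trigger_hom; [|exact Hg].
    apply staged_trigger; auto. }
  set (P := fun u (p : T * nat) => In (fst p) tk /\ lv (fst p) = S L /\
              is_evar (ss (fst p)) (snd p) /\ hh (fst p) (snd p) = u).
  assert (Puniq : forall u p p', P u p -> P u p' -> p' = p).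
  { intros u [t x] [t' y] [Ht [Hl [Hx Hu]]] [Ht' [Hl' [Hy Hu']]]. simpl in *.
    destruct (Huq t' t y x) as [-> ->]; congruence. }
  assert (Hfr : forall u, occurs u (stg L) -> ~ exists p, P u p).
  { intros u Hu [[t x] [Ht [Hl [Hx Heq]]]]. simpl in *. destruct (Hev t x Ht Hx) as [_ Hno].
    rewrite Hl in Hno. apply Hno. rewrite Heq. auto. }
  destruct Hg as [Hgc Hga]. destruct Hr as [Hrc Hra].
  set (g' := patch P (fun p => r (K (fst p) (snd p))) (fun u => r (g u))).
  assert (Hg'c : forall b, g' (Const b) = Const b).
  { intros b. unfold g'. rewrite patch_out.
    - rewrite Hgc, Hrc. auto.
    - intros [[t x] [Ht [_ [Hx Heq]]]]. destruct (Hev t x Ht Hx) as [[n Hn] _]. simpl in *.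
      congruence. }
  exists g'. split; [exact Hg'c|].
  intros A HA. apply stage_succ_In in HA as [HA | [t [b [Ht [Hl [Hbh ->]]]]]].
  - rewrite (amap_ext_args _ (fun u => r (g u))).
    + rewrite <- amap_comp. apply Hra. apply (par_step_incl _ _ HP). apply Hga. auto.
    + intros u Hu. unfold g'. rewrite patch_out; auto. apply Hfr. exists A; auto.
  - rewrite amap_asub by exact Hg'c.
    replace (asub _ b) with (amap r (asub (K t) b)).
    { apply Hra. apply (HK t (conj Ht Hl)). auto. }
    rewrite amap_asub by auto.
    apply asub_ext. intros x Hx. destruct (head_var_cases _ _ _ Hbh Hx) as [Hbv | Hevx].
    + unfold g'. rewrite patch_out.
      * f_equal. symmetry. apply (HK t (conj Ht Hl)). auto.
      * apply Hfr. apply (trigger_occurs _ (ss t) (hh t) x); auto. apply staged_trigger; auto.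
    + unfold g'. rewrite (patch_in P _ _ (hh t x) (t, x)); auto.
      * intros; eapply Puniq; eauto. unfold P; simpl; auto.
      * unfold P; simpl; auto.
Qed.

Lemma stage_hom_into_chase f c0 :
  (forall n, core_chase_step Sigma (f n) (f (S n))) -> hom_into c0 U0 (f 0) ->
  forall L, exists g, hom_into g (stg L) (f L).
Proof.
  intros Hst H0 L. induction L as [|L [g Hg]].
  - exists c0. eapply hom_incl; eauto. intros A HA. apply stage_In in HA as [HA|HA]; auto.
    destruct HA as [t [b [Ht [Hl _]]]]. destruct Htk as [Hb _]. specialize (Hb t Ht). lia.
  - exact (stage_succ_hom f L g (Hst L) Hg).
Qed.

End Staged.

Lemma NoDup_map_inj {A B} (f : A -> B) l x y :
  NoDup (map f l) -> In x l -> In y l -> f x = f y -> x = y.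
Proof.
  induction l as [|a l IH]; simpl; [tauto|]. intros Hn Hx Hy Hf. inversion Hn; subst.
  destruct Hx as [<-|Hx]; destruct Hy as [<-|Hy]; auto.
  - exfalso. apply H1. rewrite Hf. apply in_map. auto.
  - exfalso. apply H1. rewrite <- Hf. apply in_map. auto.
Qed.

Lemma surjective_inj_on {A} (e : A -> A) (T : list A) : NoDup T -> incl T (map e T) ->
  forall x y, In x T -> In y T -> e x = e y -> x = y.
Proof.
  intros Hnd Hs x y. apply NoDup_map_inj.
  apply NoDup_incl_NoDup with (l := T); auto. rewrite length_map. auto.
Qed.

Lemma core_endo_surj K J e : is_core_of K J -> hom_into e K K -> incl K (map (amap e) K).
Proof.
  intros [[Hsub [r Hr]] Hmin] He. apply Hmin.
  - intros A HA. apply in_map_iff in HA as [A' [<- HA']]. apply He. auto.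
  - split.
    + intros A HA. apply in_map_iff in HA as [A' [<- HA']]. apply Hsub. apply He. auto.
    + exists (fun t => e (r t)). eapply hom_comp; [exact Hr|]. split; [apply He|].
      intros A HA. apply in_map. auto.
Qed.

(** A core has no proper retract, so an endomorphism is onto, hence injective on
    the finitely many terms of the core. *)
Lemma core_endo_inverse K J e : is_core_of K J -> hom_into e K K ->
  exists ei, hom_into ei K K /\ forall t, occurs t K -> ei (e t) = t.
Proof.
  intros Hcore He. pose proof (core_endo_surj _ _ _ Hcore He) as Hs.
  set (T := nodup term_eq_dec (flat_map atom_args K)).
  assert (HT : forall t, In t T <-> occurs t K).
  { intros t. unfold T. rewrite nodup_In, in_flat_map. unfold occurs. tauto. }
  assert (Hmap : forall t, In t T -> In (e t) T).
  { intros t Ht. apply HT in Ht as [A [HA Ht]]. apply HT. exists (amap e A). split.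
    - apply He; auto.
    - destruct A; simpl in *; intuition congruence. }
  assert (Hsur : incl T (map e T)).
  { intros t Ht. apply HT in Ht as [A [HA Ht]]. apply Hs in HA.
    apply in_map_iff in HA as [A' [<- HA']]. apply in_map_iff.
    destruct A'; simpl in Ht; intuition (subst; eexists; split; [reflexivity|
      apply HT; eexists; split; [exact HA'| simpl; tauto]]). }
  pose proof (surjective_inj_on e T (NoDup_nodup _ _) Hsur) as Hinj.
  set (P := fun u t => In t T /\ e t = u).
  assert (Hinv : forall t, In t T -> patch P (fun t => t) (fun u => u) (e t) = t).
  { intros t Ht. apply (patch_in P (fun t => t) _ _ t); [|split; auto].
    intros p' [H1 H2]. apply Hinj; auto. }
  exists (patch P (fun t => t) (fun u => u)). split.
  - split.
    + intros b. destruct (classic (In (Const b) T)) as [Hb|Hb].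
      * destruct He as [Hec _]. rewrite <- (Hec b) at 1. apply Hinv. auto.
      * rewrite patch_out; auto. intros [t [Ht Het]]. apply Hb. rewrite <- Het. auto.
    + intros A HA. apply Hs in HA. apply in_map_iff in HA as [A' [<- HA']].
      rewrite amap_comp, (amap_ext_args _ (fun x => x)), amap_id; auto.
      intros u Hu. apply Hinv. apply HT. exists A'. auto.
  - intros t Ht. apply Hinv. apply HT. auto.
Qed.

(** A model receiving [f 0] receives every [f n]; if it also mapped into [f m], then
    [f (S m)] would map to itself through the model, an endomorphism of a core, whose
    inverse transports the model's witnesses back: no trigger of [f (S m)] is active. *)
Lemma model_not_hom_into_chase f U a0 m g :
  is_model Sigma U -> hom_into a0 (f 0) U ->
  (forall n, core_chase_step Sigma (f n) (f (S n))) ->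
  ~ hom_into g U (f m).
Proof.
  intros HU Ha0 Hst Hg.
  destruct (core_chase_step_hom _ _ (Hst m)) as [r Hr].
  pose proof (hom_comp _ _ _ _ _ Hg Hr) as Hb. set (b := fun t => r (g t)) in Hb.
  destruct (chase_hom_into_model _ _ _ HU Ha0 Hst (S m)) as [a Ha].
  pose proof (hom_comp _ _ _ _ _ Ha Hb) as He.
  destruct (Hst m) as [_ [J [_ Hcore]]].
  destruct (core_endo_inverse _ _ _ Hcore He) as [ei [Hei Hinv]].
  destruct (Hst (S m)) as [[s [h [Htr Hact]]] _].
  apply Hact. destruct (HU s (fun x => a (h x))) as [k [Hag Hk]].
  { eapply trigger_hom; eauto. }
  exists (fun x => ei (b (k x))). split.
  - intros x Hx. rewrite <- (Hag x Hx). rewrite Hinv; auto. eapply trigger_occurs; eauto.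
  - intros c Hc. destruct (hom_comp _ _ _ _ _ Hb Hei) as [Hbc Hba].
    rewrite <- (amap_asub (fun t => ei (b t))) by (intros; apply Hbc). apply Hba. apply Hk. auto.
Qed.

Lemma min_nat (Q : nat -> Prop) : (exists n, Q n) -> exists n, Q n /\ forall m, Q m -> n <= m.
Proof.
  intros [n Hn]. induction n as [n IH] using (well_founded_induction lt_wf).
  destruct (classic (exists m, Q m /\ m < n)) as [[m [Hm Hlt]]|Hno].
  - apply (IH m Hlt Hm).
  - exists n. split; auto. intros m Hm. destruct (Nat.lt_ge_cases m n); auto.
    exfalso. apply Hno. eauto.
Qed.

(** A retract of [J] of minimal length is a core of [J]. *)
Lemma core_exists J : exists K, is_core_of K J.
Proof.
  destruct (min_nat (fun n => exists K, retracts_to J K /\ length K = n))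
    as [n [[K [HK Hl]] Hmin]].
  { exists (length J), J. split; auto. split; [intros a; auto|].
    exists (fun t => t). apply hom_id. intros a; auto. }
  exists K. split; auto. intros K' Hsub [HK'J [h Hh]] a Ha.
  destruct (classic (In a K')) as [|Hna]; auto. exfalso.
  set (K'' := nodup (atom_eq_dec term_eq_dec) K').
  assert (Hlt : length K'' < n).
  { apply Nat.le_lt_trans with (length (remove (atom_eq_dec term_eq_dec) a K)).
    - apply NoDup_incl_length. apply NoDup_nodup. intros b Hb. unfold K'' in Hb.
      apply nodup_In in Hb. apply in_in_remove; auto. intros ->; auto.
    - subst n. apply remove_length_lt. auto. }
  assert (Hr : retracts_to J K'').
  { split.
    - intros b Hb. apply HK'J. unfold K'' in Hb. apply nodup_In in Hb. auto.
    - exists h. destruct Hh as [Hc Ha']. split; auto. intros b Hb. unfold K''.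
      apply nodup_In. auto. }
  specialize (Hmin (length K'') (ex_intro _ K'' (conj Hr eq_refl))). lia.
Qed.

Fixpoint tuples {A : Type} (D : list A) (n : nat) : list (list A) :=
  match n with
  | 0 => [[]]
  | S n => flat_map (fun d => map (cons d) (tuples D n)) D
  end.

Lemma tuples_In {A} (D : list A) vs : incl vs D -> In vs (tuples D (length vs)).
Proof.
  induction vs as [|v vs IH]; intros HD; simpl; auto.
  apply in_flat_map. exists v. split; [apply HD; simpl; auto|].
  apply in_map. apply IH. intros t Ht. apply HD. simpl; auto.
Qed.

Fixpoint assign (xs : list nat) (vs : list term) (x : nat) : term :=
  match xs, vs with
  | y :: xs, t :: vs => if Nat.eq_dec x y then t else assign xs vs x
  | _, _ => Null 0
  end.

Lemma assign_map xs h x : In x xs -> assign xs (map h xs) x = h x.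
Proof.
  induction xs as [|y xs IH]; simpl; [tauto|]. intros [<-|H].
  - destruct (Nat.eq_dec y y); congruence.
  - destruct (Nat.eq_dec x y); subst; auto.
Qed.

Lemma triggers_finite I : exists l : list (tgd * (nat -> term)),
  forall s h, trigger Sigma I s h -> exists h', In (s, h') l /\ agree_on (body_vars s) h h'.
Proof.
  set (D := flat_map atom_args I).
  exists (flat_map (fun s => map (fun vs => (s, assign (body_vars s) vs))
                                 (tuples D (length (body_vars s)))) Sigma).
  intros s h Htr. exists (assign (body_vars s) (map h (body_vars s))). split.
  - apply in_flat_map. exists s. split; [apply Htr|].
    apply in_map_iff. exists (map h (body_vars s)). split; auto.
    rewrite <- (length_map h). apply tuples_In.
    intros t Ht. apply in_map_iff in Ht as [x [<- Hx]].
    destruct (trigger_occurs _ _ _ _ Htr Hx) as [a [Ha Ht]]. apply in_flat_map. eauto.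
  - intros x Hx. symmetry. apply assign_map. auto.
Qed.

Lemma class_representatives {A : Type} (d : A) (P : A -> Prop) (R : A -> A -> Prop) (l : list A) :
  (forall x, R x x) -> (forall x y, R x y -> R y x) ->
  (forall x y z, R x y -> R y z -> R x z) -> (forall x y, R x y -> P x -> P y) ->
  (forall x, P x -> exists y, In y l /\ R x y) ->
  exists l', (forall y, In y l' -> P y) /\ (forall x, P x -> exists y, In y l' /\ R x y) /\
    forall i j, i < length l' -> j < length l' -> R (nth i l' d) (nth j l' d) -> i = j.
Proof.
  intros Hrefl Hsym Htrans HP Hcov.
  assert (Hind : exists l', (forall y, In y l' -> P y) /\
    (forall x, In x l -> P x -> exists y, In y l' /\ R x y) /\
    forall i j, i < j < length l' -> ~ R (nth i l' d) (nth j l' d)).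
  { clear Hcov. induction l as [|a l [l' [H1 [H2 H3]]]].
    - exists []. simpl. repeat split; intros; try tauto. lia.
    - destruct (classic (P a /\ ~ exists y, In y l' /\ R a y)) as [[Ha Hnew]|Hold].
      + exists (a :: l'). split; [|split].
        * intros y [<-|Hy]; auto.
        * intros x [<-|Hx] Hpx; [exists a; simpl; auto|].
          destruct (H2 x Hx Hpx) as [y [Hy Hr]]. exists y. simpl; auto.
        * intros [|i] [|j] Hij Hr; simpl in *; try lia.
          -- apply Hnew. exists (nth (j - 0) l' d). split; [apply nth_In; lia|].
             rewrite Nat.sub_0_r. exact Hr.
          -- apply (H3 i j); [lia|exact Hr].
      + exists l'. split; [exact H1|split; [|exact H3]].
        intros x [<-|Hx] Hpx; auto. apply NNPP. intros Hno. apply Hold. split; auto. }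
  destruct Hind as [l' [H1 [H2 H3]]]. exists l'. split; [exact H1|split].
  - intros x Hx. destruct (Hcov x Hx) as [y [Hy Hxy]].
    destruct (H2 y Hy (HP x y Hxy Hx)) as [z [Hz Hyz]]. eauto.
  - intros i j Hi Hj Hr. destruct (Nat.lt_trichotomy i j) as [Hij|[Hij|Hij]]; auto.
    + exfalso. apply (H3 i j); auto.
    + exfalso. apply (H3 j i); auto.
Qed.

Lemma pair_inj M i j x y : x < M -> y < M -> i * M + x = j * M + y -> i = j /\ x = y.
Proof.
  intros Hx Hy H. destruct (Nat.lt_trichotomy i j) as [Hij|[Hij|Hij]].
  - exfalso. assert (i * M + M <= j * M) by nia. lia.
  - subst. lia.
  - exfalso. assert (j * M + M <= i * M) by nia. lia.
Qed.

Definition null_index (t : term) : nat := match t with Null n => n | _ => 0 end.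

Definition null_bound (I : instance) : nat :=
  S (list_max (map null_index (flat_map atom_args I))).

Lemma occurs_null_lt I n : occurs (Null n) I -> n < null_bound I.
Proof.
  intros [a [Ha Hn]]. apply Nat.lt_succ_r. change n with (null_index (Null n)).
  apply in_list_max, in_map, in_flat_map. eauto.
Qed.

Definition evar_bound : nat := S (list_max (flat_map (fun s => atoms_vars (Defs.head s)) Sigma)).

Lemma evar_lt s x : In s Sigma -> is_evar s x -> x < evar_bound.
Proof. intros Hs [Hx _]. apply Nat.lt_succ_r, in_list_max, in_flat_map. eauto. Qed.

Definition rename_evars (base M i : nat) (p : tgd * (nat -> term)) : tgd * (nat -> term) :=
  (fst p, fun x => if in_dec Nat.eq_dec x (body_vars (fst p)) then snd p x
                   else Null (base + i * M + x)).

Lemma rename_evars_agree base M i p :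
  agree_on (body_vars (fst p)) (snd p) (snd (rename_evars base M i p)).
Proof. intros x Hx. simpl. destruct (in_dec Nat.eq_dec x (body_vars (fst p))); tauto. Qed.

Lemma nth_map_seq {A} (f : nat -> A) n i d : i < n -> nth i (map f (seq 0 n)) d = f i.
Proof.
  intros Hi. rewrite nth_indep with (d' := f 0) by (rewrite length_map, length_seq; auto).
  rewrite map_nth, seq_nth; auto.
Qed.

Definition same_trigger (p q : tgd * (nat -> term)) : Prop :=
  fst p = fst q /\ agree_on (body_vars (fst p)) (snd p) (snd q).

(** Firing a list [C] of representatives of the active triggers, where the
    existential variable [x] of the [i]-th one becomes the null [base + i * M + x]. *)
Lemma par_step_of_representatives I (C : list (tgd * (nat -> term))) :
  (forall p, In p C -> trigger Sigma I (fst p) (snd p) /\ active I (fst p) (snd p)) ->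
  (forall s h, trigger Sigma I s h -> active I s h ->
     exists p, In p C /\ same_trigger (s, h) p) ->
  (forall i j, i < length C -> j < length C ->
     same_trigger (nth i C dflt_trig) (nth j C dflt_trig) -> i = j) ->
  exists J, par_step Sigma I J.
Proof.
  intros HC Hcov Huniq.
  set (base := null_bound I). set (M := evar_bound).
  set (ren := fun i => rename_evars base M i (nth i C dflt_trig)).
  set (ts := map ren (seq 0 (length C))).
  assert (Hlen : length ts = length C) by (unfold ts; rewrite length_map, length_seq; auto).
  assert (Hnth : forall i, i < length C -> nth i ts dflt_trig = ren i)
    by (intros i Hi; apply nth_map_seq; auto).
  assert (Hev : forall i x, i < length C -> is_evar (tS ts i) x ->
            tH ts i x = Null (base + i * M + x) /\ x < M).
  { unfold tS, tH. intros i x Hi Hx. rewrite Hnth in * by auto. simpl in *. split.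
    - destruct (in_dec Nat.eq_dec x (body_vars (fst (nth i C dflt_trig)))); [|auto].
      exfalso. apply Hx. auto.
    - exact (evar_lt _ x (proj1 (proj1 (HC _ (nth_In _ _ Hi)))) Hx). }
  exists (I ++ fired ts). apply par_step_iff. exists ts. split; [|reflexivity].
  unfold parallel_firing. rewrite Hlen. split; [|split; [|split; [|split]]].
  - intros p Hp. unfold ts in Hp. apply in_map_iff in Hp as [i [<- Hi]].
    apply in_seq in Hi. destruct (HC _ (nth_In C dflt_trig (proj2 Hi))) as [Htr Hact].
    split; [exact (trigger_agree _ _ _ _ (rename_evars_agree _ _ i _) Htr)
           | exact (active_agree _ _ _ _ (rename_evars_agree _ _ i _) Hact)].
  - intros s h Htr Hact. destruct (Hcov s h Htr Hact) as [p [Hp [Hs Hag]]]. simpl in Hs, Hag.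
    apply In_nth with (d := dflt_trig) in Hp as [i [Hi <-]].
    exists (snd (ren i)). split.
    + replace (s, _) with (nth i ts dflt_trig); [apply nth_In; lia|].
      rewrite Hnth by auto. unfold ren, rename_evars. simpl. rewrite Hs. reflexivity.
    + intros x Hx. rewrite Hag by auto. apply rename_evars_agree. rewrite <- Hs. auto.
  - unfold tS, tH. intros i j Hi Hj Hs Hag. rewrite !Hnth in Hs, Hag by auto.
    apply Huniq; auto. split; [exact Hs|]. intros x Hx.
    transitivity (snd (ren i) x); [exact (rename_evars_agree _ _ i _ x Hx)|].
    rewrite (Hag x Hx). symmetry. apply rename_evars_agree. simpl in Hs. rewrite <- Hs. exact Hx.
  - intros i x Hi Hx. destruct (Hev i x Hi Hx) as [-> _]. eexists; split; [reflexivity|].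
    intros Ho. apply occurs_null_lt in Ho. unfold base in *. lia.
  - intros i j x y Hi Hj Hx Hy Heq.
    destruct (Hev i x Hi Hx) as [Ex Hxm], (Hev j y Hj Hy) as [Ey Hym].
    rewrite Ex, Ey in Heq. injection Heq as Heq. apply pair_inj with M; auto. lia.
Qed.

Lemma core_chase_step_exists I : has_active_trigger Sigma I -> exists K, core_chase_step Sigma I K.
Proof.
  intros Hact.
  destruct (triggers_finite I) as [l Hl].
  destruct (class_representatives dflt_trig
    (fun p => trigger Sigma I (fst p) (snd p) /\ active I (fst p) (snd p)) same_trigger l)
    as [C [HC [Hcov Huniq]]].
  - intros [s h]. split; [reflexivity|]. intros x _. reflexivity.
  - intros [s h] [s' h'] [Hs Hag]. simpl in *. subst s'. split; auto.
    intros x Hx. symmetry. auto.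
  - intros [s h] [s' h'] [s'' h''] [Hs Hag] [Hs' Hag']. simpl in *. subst. split; auto.
    intros x Hx. rewrite Hag; auto.
  - intros [s h] [s' h'] [Hs Hag] [Htr Hac]. simpl in *. subst s'.
    split; [eapply trigger_agree | eapply active_agree]; eauto.
  - intros [s h] [Htr Hac]. destruct (Hl s h Htr) as [h' [Hin Hag]]. exists (s, h'). split; auto.
    split; auto.
  - destruct (par_step_of_representatives I C HC) as [J HJ].
    + intros s h Htr Hac. apply (Hcov (s, h)). split; auto.
    + exact Huniq.
    + destruct (core_exists J) as [K HK]. exists K. split; eauto.
Qed.

End Chase.

Lemma path_atoms_In st w a : In a (path_atoms st w) <->
  exists i, i < length w /\ a = AE (VV (st + i)) (VC (nth i w false)) (VV (st + S i)).
Proof.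
  revert st. induction w as [|b w IH]; intros st; simpl.
  - split; [tauto|]. intros [i [Hi _]]. lia.
  - rewrite IH. split.
    + intros [<-|[i [Hi ->]]].
      * exists 0. split; [lia|]. f_equal; f_equal; lia.
      * exists (S i). split; [lia|]. f_equal; f_equal; lia.
    + intros [[|i] [Hi ->]].
      * left. f_equal; f_equal; lia.
      * right. exists i. split; [lia|]. f_equal; f_equal; lia.
Qed.

Lemma atoms_vars_cons a l : atoms_vars (a :: l) = avars a ++ atoms_vars l.
Proof. reflexivity. Qed.

Lemma atoms_vars_app l1 l2 : atoms_vars (l1 ++ l2) = atoms_vars l1 ++ atoms_vars l2.
Proof. unfold atoms_vars. apply flat_map_app. Qed.

Lemma path_vars st w x :
  In x (atoms_vars (path_atoms st w)) <-> w <> [] /\ st <= x <= st + length w.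
Proof.
  revert st. induction w as [|b w IH]; intros st.
  - simpl. split; [tauto|]. intros [H _]; congruence.
  - change (path_atoms st (b :: w)) with (AE (VV st) (VC b) (VV (S st)) :: path_atoms (S st) w).
    rewrite atoms_vars_cons, in_app_iff, IH. simpl. split.
    + intros [[E|[E|[]]]|[Hw Hx]]; subst; split; try congruence; lia.
    + intros [_ Hx]. destruct (Nat.eq_dec x st) as [->|Hne]; [tauto|].
      destruct (Nat.eq_dec x (S st)) as [->|Hne2]; [tauto|].
      right. destruct w; simpl in *; [lia|]. split; [congruence|lia].
Qed.

Lemma rule_tgd_eq l r : rule_tgd (l, r) =
  (path_atoms 0 l, AL (VV 0) (VV (S (length l))) :: path_atoms (S (length l)) r ++
                   [AR (VV (length l)) (VV (S (length l) + length r))]).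
Proof. reflexivity. Qed.

Lemma rule_body_vars l r : body_vars (rule_tgd (l, r)) = atoms_vars (path_atoms 0 l).
Proof. reflexivity. Qed.

Lemma is_evar_rule_tgd l r x : l <> [] -> is_evar (rule_tgd (l, r)) x ->
  S (length l) <= x <= S (length l) + length r.
Proof.
  intros Hl [Hh Hb]. rewrite rule_body_vars, path_vars in Hb.
  assert (length l < x)
    by (destruct (Nat.lt_ge_cases (length l) x); auto; exfalso; apply Hb; split; auto; lia).
  rewrite rule_tgd_eq in Hh. unfold Defs.head, snd in Hh.
  rewrite atoms_vars_cons, atoms_vars_app, !in_app_iff in Hh. simpl in Hh.
  destruct Hh as [[E|[E|[]]]|[Hh|[E|[E|[]]]]]; subst; try lia.
  apply path_vars in Hh. lia.
Qed.

Lemma rule_evar_of_range l r x : S (length l) <= x <= S (length l) + length r ->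
  is_evar (rule_tgd (l, r)) x.
Proof.
  intros Hx. split.
  - rewrite rule_tgd_eq. unfold Defs.head, snd.
    rewrite atoms_vars_cons, atoms_vars_app, !in_app_iff.
    destruct (Nat.eq_dec x (S (length l) + length r)) as [->|Hne].
    + right. right. unfold atoms_vars, avars. simpl. tauto.
    + right. left. apply path_vars. destruct r; simpl in *; [lia|]. split; [congruence|lia].
  - rewrite rule_body_vars, path_vars. lia.
Qed.

Lemma is_evar_tgd_L c x : is_evar (tgd_L c) x <-> x = 3.
Proof.
  split; [intros [Hh Hb]; simpl in *; intuition|].
  intros ->. split; simpl; [tauto|]. intuition discriminate.
Qed.

Lemma is_evar_tgd_R c x : is_evar (tgd_R c) x <-> x = 3.
Proof.
  split; [intros [Hh Hb]; simpl in *; intuition|].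
  intros ->. split; simpl; [tauto|]. intuition discriminate.
Qed.

Section Rewriting.

Variable Theta : rws.
Hypothesis Hlhs : forall l r, In (l, r) Theta -> l <> nil.

Lemma Sigma_R_In s : In s (Sigma_R Theta) ->
  (exists l r, In (l, r) Theta /\ s = rule_tgd (l, r)) \/
  (exists c, s = tgd_L c) \/ (exists c, s = tgd_R c).
Proof.
  unfold Sigma_R, Sigma_Theta. rewrite in_app_iff. intros [H|H].
  - apply in_map_iff in H as [[l r] [<- H]]. left. eauto.
  - simpl in H. right. destruct H as [<-|[<-|[<-|[<-|[]]]]]; eauto.
Qed.

Lemma rule_tgd_in_Sigma_R l r : In (l, r) Theta -> In (rule_tgd (l, r)) (Sigma_R Theta).
Proof. intros H. apply in_app_iff. left. apply in_map_iff. eauto. Qed.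

Lemma tgd_L_in_Sigma_R c : In (tgd_L c) (Sigma_R Theta).
Proof. apply in_app_iff. right. destruct c; simpl; tauto. Qed.

Lemma tgd_R_in_Sigma_R c : In (tgd_R c) (Sigma_R Theta).
Proof. apply in_app_iff. right. destruct c; simpl; tauto. Qed.

Lemma Sigma_R_body_var0 s : In s (Sigma_R Theta) -> In 0 (body_vars s).
Proof.
  intros Hs. apply Sigma_R_In in Hs as [[l [r [Hin ->]]]|[[c ->]|[c ->]]].
  - rewrite rule_body_vars. apply path_vars. split; [eapply Hlhs; eauto| lia].
  - simpl; tauto.
  - simpl; tauto.
Qed.

Lemma rstep_nonempty u v : rstep Theta u v -> u <> [].
Proof.
  intros [x [y [l [r [Hin [-> _]]]]]] E. apply (Hlhs l r Hin).
  destruct l; auto. exfalso. destruct x; simpl in E; discriminate.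
Qed.

(** * From an infinite derivation to an infinite core chase *)

Definition path_in (I : instance) (q : nat -> term) (u : word) : Prop :=
  forall i, i < length u -> In (AE (q i) (Const (nth i u false)) (q (S i))) I.

Lemma path_in_app I q u1 u2 :
  path_in I q (u1 ++ u2) -> path_in I q u1 /\ path_in I (fun i => q (length u1 + i)) u2.
Proof.
  intros H. split.
  - intros i Hi. rewrite <- (app_nth1 u1 u2) by auto. apply H. rewrite length_app. lia.
  - intros i Hi. replace (length u1 + S i) with (S (length u1 + i)) by lia.
    replace (nth i u2 false) with (nth (length u1 + i) (u1 ++ u2) false).
    + apply H. rewrite length_app. lia.
    + rewrite app_nth2 by lia. f_equal. lia.
Qed.

Definition path_join (n : nat) (q1 q2 : nat -> term) (i : nat) : term :=
  if i <=? n then q1 i else q2 (i - n).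

Lemma path_in_join I q1 q2 u1 u2 : path_in I q1 u1 -> path_in I q2 u2 ->
  q1 (length u1) = q2 0 -> path_in I (path_join (length u1) q1 q2) (u1 ++ u2).
Proof.
  intros H1 H2 E i Hi. rewrite length_app in Hi. unfold path_join.
  destruct (Nat.ltb_spec i (length u1)) as [Hlt|Hge].
  - rewrite (proj2 (Nat.leb_le _ _)), (proj2 (Nat.leb_le _ _)) by lia.
    rewrite app_nth1 by auto. auto.
  - rewrite app_nth2 by auto. replace (S i - length u1) with (S (i - length u1)) by lia.
    destruct (Nat.leb_spec (S i) (length u1)); [lia|].
    destruct (Nat.leb_spec i (length u1)).
    + replace i with (length u1) in * by lia. rewrite E, Nat.sub_diag. apply H2. lia.
    + apply H2. lia.
Qed.

Section Model.

Variable I : instance.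
Hypothesis HM : is_model (Sigma_R Theta) I.

Lemma model_rule_path l r q : In (l, r) Theta -> path_in I q l ->
  exists q', path_in I q' r /\ In (AL (q 0) (q' 0)) I /\
             In (AR (q (length l)) (q' (length r))) I.
Proof.
  intros Hin Hq. destruct (HM (rule_tgd (l, r)) q) as [h' [Hag Hh]].
  { split; [apply rule_tgd_in_Sigma_R; auto|]. intros a Ha.
    apply path_atoms_In in Ha as [i [Hi ->]]. apply Hq; auto. }
  assert (Hb : forall z, z <= length l -> q z = h' z).
  { intros z Hz. apply Hag. rewrite rule_body_vars, path_vars. split; [eapply Hlhs; eauto|lia]. }
  exists (fun j => h' (S (length l) + j)). split; [|split].
  - intros j Hj.
    assert (Hj' : In (AE (VV (S (length l) + j)) (VC (nth j r false)) (VV (S (length l) + S j)))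
                     (Defs.head (rule_tgd (l, r))))
      by (right; apply in_app_iff; left; apply path_atoms_In; eauto).
    exact (Hh _ Hj').
  - rewrite Hb, Nat.add_0_r by lia. apply (Hh (AL (VV 0) (VV (S (length l))))). left; auto.
  - rewrite Hb by lia. apply (Hh (AR (VV (length l)) (VV (S (length l) + length r)))).
    right. apply in_app_iff. right. left; auto.
Qed.

(** The tgds [tgd_L] copy a path backwards along an [L]-edge at its end. *)
Lemma model_L_path u : forall q z, path_in I q u -> In (AL (q (length u)) z) I ->
  exists q', path_in I q' u /\ q' (length u) = z /\ In (AL (q 0) (q' 0)) I.
Proof.
  induction u as [|c u IH] using rev_ind; intros q z Hq Hz.
  - exists (fun _ => z). split; [intros i Hi; simpl in Hi; lia|]. auto.
  - apply path_in_app in Hq as [Hq Hc]. rewrite length_app in Hz. simpl in Hz.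
    set (n := length u) in *.
    destruct (HM (tgd_L c) (fun v => match v with 0 => q n | 1 => q (S n) | _ => z end))
      as [h [Hag Hh]].
    { split; [apply tgd_L_in_Sigma_R|]. intros a [<-|[<-|[]]]; simpl.
      - specialize (Hc 0 ltac:(simpl; lia)). simpl in Hc.
        rewrite Nat.add_0_r, Nat.add_1_r in Hc. exact Hc.
      - rewrite Nat.add_1_r in Hz. exact Hz. }
    assert (A0 : q n = h 0) by (apply (Hag 0); simpl; tauto).
    assert (A2 : z = h 2) by (apply (Hag 2); simpl; tauto).
    destruct (IH q (h 3) Hq) as [q' [Hq' [Eq' HL]]].
    { rewrite A0. apply (Hh (AL (VV 0) (VV 3))). simpl; tauto. }
    exists (path_join n q' (fun i => match i with 0 => h 3 | _ => z end)). split; [|split].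
    + apply path_in_join; auto. intros i Hi. simpl in Hi. replace i with 0 by lia. simpl.
      rewrite A2. apply (Hh (AE (VV 3) (VC c) (VV 2))). simpl; tauto.
    + unfold path_join. rewrite length_app. fold n. simpl length.
      destruct (Nat.leb_spec (n + 1) n); [lia|]. replace (n + 1 - n) with 1 by lia. reflexivity.
    + exact HL.
Qed.

(** The tgds [tgd_R] copy a path forwards along an [R]-edge at its start. *)
Lemma model_R_path u : forall q z, path_in I q u -> In (AR (q 0) z) I ->
  exists q', path_in I q' u /\ q' 0 = z /\ In (AR (q (length u)) (q' (length u))) I.
Proof.
  induction u as [|c u IH]; intros q z Hq Hz.
  - exists (fun _ => z). split; [intros i Hi; simpl in Hi; lia|]. auto.
  - destruct (HM (tgd_R c) (fun v => match v with 0 => q 0 | 1 => z | _ => q 1 end))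
      as [h [Hag Hh]].
    { split; [apply tgd_R_in_Sigma_R|]. intros a [<-|[<-|[]]]; simpl; auto.
      apply (Hq 0). simpl; lia. }
    assert (A1 : z = h 1) by (apply (Hag 1); simpl; tauto).
    assert (A2 : q 1 = h 2) by (apply (Hag 2); simpl; tauto).
    destruct (IH (fun i => q (S i)) (h 3)) as [q' [Hq' [Eq' HR]]].
    + intros i Hi. apply (Hq (S i)). simpl; lia.
    + rewrite A2. apply (Hh (AR (VV 2) (VV 3))). simpl; tauto.
    + exists (path_join 1 (fun i => match i with 0 => z | _ => h 3 end) q').
      change (c :: u) with ([c] ++ u). split; [|split; [reflexivity|]].
      * apply path_in_join; auto. intros i Hi. simpl in Hi. replace i with 0 by lia. simpl.
        rewrite A1. apply (Hh (AE (VV 1) (VC c) (VV 3))). simpl; tauto.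
      * simpl length. unfold path_join. destruct (Nat.leb_spec (S (length u)) 1).
        -- destruct u; simpl in *; [|lia]. rewrite <- Eq'. exact HR.
        -- replace (S (length u) - 1) with (length u) by lia. exact HR.
Qed.

Lemma model_rstep_path q u v : path_in I q u -> rstep Theta u v ->
  exists q', path_in I q' v /\ In (AL (q 0) (q' 0)) I.
Proof.
  intros Hq [x [y [l [r [Hin [-> ->]]]]]].
  apply path_in_app in Hq as [Hx Hly]. apply path_in_app in Hly as [Hl Hy].
  destruct (model_rule_path l r _ Hin Hl) as [qr [Hr [HL HR]]].
  rewrite Nat.add_0_r in HL.
  destruct (model_L_path x q (qr 0) Hx HL) as [qx [Hqx [Eqx HLx]]].
  destruct (model_R_path y _ (qr (length r)) Hy) as [qy [Hqy [Eqy _]]].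
  { rewrite Nat.add_0_r. exact HR. }
  exists (path_join (length x) qx (path_join (length r) qr qy)). split; [|exact HLx].
  apply path_in_join; [exact Hqx| |now rewrite Eqx].
  apply path_in_join; auto.
Qed.

End Model.

Definition grade_ok (g : term -> nat) (A : atom term) : Prop :=
  match A with
  | AE t1 _ t3 => g t3 = g t1
  | AL t1 t2 => g t2 = S (g t1)
  | AR t1 t2 => g t2 = S (g t1)
  end.

Definition graded (g : term -> nat) (I : instance) : Prop := forall A, In A I -> grade_ok g A.

Lemma grade_ok_ext g g' A :
  (forall u, In u (atom_args A) -> g u = g' u) -> grade_ok g A -> grade_ok g' A.
Proof. intros H; destruct A; simpl in *; rewrite !H by tauto; auto. Qed.

Lemma I_word_from_graded k w : graded (fun _ => 0) (I_word_from k w).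
Proof.
  revert k. induction w as [|b w IH]; intros k A HA; simpl in HA; [tauto|].
  destruct HA as [<-|HA]; [reflexivity|]. eapply IH; eauto.
Qed.

Lemma Sigma_R_head_graded s g h : In s (Sigma_R Theta) ->
  (forall a, In a (body s) -> grade_ok g (asub h a)) ->
  (forall x, is_evar s x -> g (h x) = S (g (h 0))) ->
  forall a, In a (Defs.head s) -> grade_ok g (asub h a).
Proof.
  intros Hs Hb He. apply Sigma_R_In in Hs as [[l [r [Hin ->]]]|[[c ->]|[c ->]]].
  - assert (Hb0 : forall i, i <= length l -> g (h i) = g (h 0)).
    { induction i as [|i IH]; intros Hi; auto. rewrite <- IH by lia.
      apply (Hb (AE (VV i) (VC (nth i l false)) (VV (S i)))).
      apply path_atoms_In. exists i. split; [lia|reflexivity]. }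
    assert (Hev : forall x, S (length l) <= x <= S (length l) + length r ->
                  g (h x) = S (g (h 0)))
      by (intros x Hx; apply He, rule_evar_of_range; auto).
    rewrite rule_tgd_eq. intros a [<-|Ha]; [apply Hev; lia|].
    apply in_app_iff in Ha as [Ha|[<-|[]]].
    + apply path_atoms_In in Ha as [i [Hi ->]]. simpl.
      rewrite (Hev (S (length l + i))), (Hev (S (length l + S i))); auto; lia.
    + simpl. rewrite (Hev (S (length l + length r))), (Hb0 (length l)) by lia. reflexivity.
  - assert (B1 : g (h 1) = g (h 0)) by (apply (Hb (AE (VV 0) (VC c) (VV 1))); simpl; tauto).
    assert (B2 : g (h 2) = S (g (h 1))) by (apply (Hb (AL (VV 1) (VV 2))); simpl; tauto).
    assert (E3 : g (h 3) = S (g (h 0))) by (apply He, is_evar_tgd_L; auto).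
    intros a [<-|[<-|[]]]; simpl; congruence.
  - assert (B1 : g (h 1) = S (g (h 0))) by (apply (Hb (AR (VV 0) (VV 1))); simpl; tauto).
    assert (B2 : g (h 2) = g (h 0)) by (apply (Hb (AE (VV 0) (VC c) (VV 2))); simpl; tauto).
    assert (E3 : g (h 3) = S (g (h 0))) by (apply He, is_evar_tgd_R; auto).
    intros a [<-|[<-|[]]]; simpl; congruence.
Qed.

(** A fresh null is graded one above the image of the variable [0], which occurs in
    every body because left-hand sides are nonempty. *)
Lemma par_step_graded g I J : graded g I -> par_step (Sigma_R Theta) I J ->
  exists g', graded g' J.
Proof.
  intros Hg HP. apply par_step_iff in HP as [ts [Hts ->]].
  set (g' := patch (fresh_tag ts) (fun p => S (g (tH ts (fst p) 0))) g).
  assert (Hg'I : forall u, occurs u I -> g' u = g u).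
  { intros u Hu. apply patch_out. apply (fresh_tag_not_occurs _ I ts Hts); auto. }
  assert (HgI : forall A, In A I -> grade_ok g' A).
  { intros A HA. apply grade_ok_ext with g; [|auto]. intros u Hu. symmetry. apply Hg'I.
    exists A; auto. }
  exists g'. intros A HA. apply in_app_iff in HA as [HA|HA]; auto.
  apply (fired_In ts) in HA as [i [b [Hi [Hb ->]]]].
  pose proof (firing_trigger _ _ _ Hts i Hi) as Htr.
  apply (Sigma_R_head_graded (tS ts i) g' (tH ts i)); auto.
  - apply Htr.
  - intros a Ha. apply HgI. apply Htr. auto.
  - intros x Hx. unfold g' at 1. rewrite (patch_in _ _ _ _ (i, x)).
    + simpl. f_equal. symmetry. apply Hg'I. eapply trigger_occurs; [exact Htr|].
      apply Sigma_R_body_var0. apply Htr.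
    + intros p' Hp'. eapply (fresh_tag_unique _ I ts Hts); eauto. split; auto.
    + split; auto.
Qed.

Lemma I_word_from_path k w i : i < length w ->
  In (AE (Null (k + i)) (Const (nth i w false)) (Null (k + S i))) (I_word_from k w).
Proof.
  revert k i. induction w as [|b w IH]; intros k i Hi; simpl in *; [lia|].
  destruct i as [|i].
  - left. f_equal; f_equal; lia.
  - right. replace (k + S i) with (S k + i) by lia. replace (k + S (S i)) with (S k + S i) by lia.
    apply IH. lia.
Qed.

(** Along an infinite derivation, the start of the path spelling the current word
    climbs one grade at each step, which a finite graded model cannot afford. *)
Lemma no_graded_model w0 I c g : infinite_derivation Theta w0 ->
  is_model (Sigma_R Theta) I -> hom_into c (I_word w0) I -> graded g I -> False.
Proof.
  intros [fw [Hf0 Hfs]] HM [Hcc Hca] Hg.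
  set (q0 := fun i => c (Null i)).
  assert (Hp0 : path_in I q0 w0).
  { intros i Hi. unfold q0. rewrite <- (Hcc (nth i w0 false)).
    apply (Hca (AE (Null i) (Const (nth i w0 false)) (Null (S i)))).
    apply (I_word_from_path 0 w0 i Hi). }
  assert (Hk : forall k, exists q, path_in I q (fw k) /\ g (q 0) = g (q0 0) + k).
  { induction k as [|k [q [Hq Hgq]]].
    - exists q0. rewrite Hf0, Nat.add_0_r. auto.
    - destruct (model_rstep_path I HM q (fw k) (fw (S k)) Hq (Hfs k)) as [q' [Hq' HL]].
      exists q'. split; auto. specialize (Hg _ HL). simpl in Hg. lia. }
  set (B := list_max (map g (flat_map atom_args I))).
  destruct (Hk (S B)) as [q [Hq Hgq]].
  assert (Hne : fw (S B) <> []) by (eapply rstep_nonempty; eauto).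
  assert (HA : In (AE (q 0) (Const (nth 0 (fw (S B)) false)) (q 1)) I).
  { apply Hq. destruct (fw (S B)); simpl; [congruence|lia]. }
  assert (g (q 0) <= B).
  { apply in_list_max. apply in_map. apply in_flat_map. eexists. split; [exact HA|]. simpl; auto. }
  lia.
Qed.

Definition chase_invariant (w0 : word) (I : instance) : Prop :=
  (exists c, hom_into c (I_word w0) I) /\ (exists g, graded g I).

Lemma chase_invariant_step w0 I : infinite_derivation Theta w0 -> chase_invariant w0 I ->
  exists K, core_chase_step (Sigma_R Theta) I K /\ chase_invariant w0 K.
Proof.
  intros Hd [[c Hc] [g Hg]].
  assert (Hact : has_active_trigger (Sigma_R Theta) I).
  { apply NNPP. intros Hna. apply model_of_no_active_trigger in Hna.
    eapply no_graded_model; eauto. }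
  destruct (core_chase_step_exists _ I Hact) as [K HK]. exists K. split; auto. split.
  - destruct (core_chase_step_hom _ _ _ HK) as [r Hr]. eexists. eapply hom_comp; eauto.
  - destruct HK as [_ [J [HP [[Hsub _] _]]]].
    destruct (par_step_graded g I J Hg HP) as [g' Hg']. exists g'.
    intros A HA. apply Hg'. apply Hsub. auto.
Qed.

Lemma infinite_chase_of_derivation w0 : infinite_derivation Theta w0 ->
  core_chase_infinite (Sigma_R Theta) (I_word w0).
Proof.
  intros Hd.
  set (next := fun I => epsilon (inhabits ([] : instance))
                   (fun K => core_chase_step (Sigma_R Theta) I K /\ chase_invariant w0 K)).
  assert (Hnext : forall I, chase_invariant w0 I ->
            core_chase_step (Sigma_R Theta) I (next I) /\ chase_invariant w0 (next I)).
  { intros I HI. apply epsilon_spec. apply chase_invariant_step; auto. }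
  set (f := fun n => Nat.iter n next (I_word w0)).
  assert (Hinv : forall n, chase_invariant w0 (f n)).
  { induction n as [|n IH].
    - split; [exists (fun t => t); apply hom_id; intros a; auto|].
      exists (fun _ => 0). apply I_word_from_graded.
    - apply (Hnext _ IH). }
  exists f. split; [reflexivity|]. intros n. apply (Hnext _ (Hinv n)).
Qed.

(** * From bounded derivations to a finite universal model *)

(** A step [(k, p)] applies the [k]-th rule of [Theta] at position [p]. *)
Definition rule k := nth k Theta ([], []).
Definition lhs k := fst (rule k).
Definition rhs k := snd (rule k).

Definition apply_step (st : nat * nat) (u : word) : word :=
  firstn (snd st) u ++ rhs (fst st) ++ skipn (snd st + length (lhs (fst st))) u.

Definition step_ok (st : nat * nat) (u : word) : bool :=
  (fst st <? length Theta) && (snd st + length (lhs (fst st)) <=? length u) &&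
  if list_eq_dec Bool.bool_dec (firstn (length (lhs (fst st))) (skipn (snd st) u)) (lhs (fst st))
  then true else false.

Lemma rule_In k : k < length Theta -> In (lhs k, rhs k) Theta.
Proof. intros Hk. unfold lhs, rhs. rewrite <- surjective_pairing. apply nth_In. auto. Qed.

Lemma step_ok_spec k p u : step_ok (k, p) u = true ->
  k < length Theta /\ p + length (lhs k) <= length u /\
  u = firstn p u ++ lhs k ++ skipn (p + length (lhs k)) u.
Proof.
  unfold step_ok. simpl. intros H. apply andb_prop in H as [H H3]. apply andb_prop in H as [H1 H2].
  apply Nat.ltb_lt in H1. apply Nat.leb_le in H2.
  destruct (list_eq_dec Bool.bool_dec _ _) as [E|]; [|discriminate].
  split; auto. split; auto. rewrite <- (firstn_skipn p u) at 1. f_equal.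
  rewrite <- (firstn_skipn (length (lhs k)) (skipn p u)) at 1. rewrite E. f_equal.
  rewrite skipn_skipn. f_equal. lia.
Qed.

Lemma step_ok_rstep k p u : step_ok (k, p) u = true -> rstep Theta u (apply_step (k, p) u).
Proof.
  intros H. apply step_ok_spec in H as [Hk [_ Hu]].
  exists (firstn p u), (skipn (p + length (lhs k)) u), (lhs k), (rhs k).
  split; [apply rule_In; auto|]. split; auto.
Qed.

Lemma step_ok_of_nth k p u : k < length Theta -> p + length (lhs k) <= length u ->
  (forall i, i < length (lhs k) -> nth (p + i) u false = nth i (lhs k) false) ->
  step_ok (k, p) u = true.
Proof.
  intros Hk Hle Hn. unfold step_ok. simpl.
  apply andb_true_intro.
  split; [apply andb_true_intro; split; [apply Nat.ltb_lt | apply Nat.leb_le]; auto|].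
  destruct (list_eq_dec Bool.bool_dec _ _) as [E|E]; auto. exfalso. apply E.
  apply nth_ext with (d := false) (d' := false).
  - rewrite length_firstn, length_skipn. lia.
  - intros i Hi. rewrite length_firstn, length_skipn in Hi. rewrite nth_firstn.
    destruct (Nat.ltb_spec i (length (lhs k))); [|lia].
    rewrite nth_skipn. apply Hn. lia.
Qed.

Lemma rstep_step_ok u v : rstep Theta u v ->
  exists k p, step_ok (k, p) u = true /\ v = apply_step (k, p) u.
Proof.
  intros [x [y [l [r [Hin [-> ->]]]]]]. apply In_nth with (d := ([], [])) in Hin as [k [Hk Ek]].
  assert (El : lhs k = l) by (unfold lhs, rule; rewrite Ek; auto).
  assert (Er : rhs k = r) by (unfold rhs, rule; rewrite Ek; auto).
  exists k, (length x). split.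
  - apply step_ok_of_nth; rewrite ?El; auto.
    + rewrite !length_app. lia.
    + intros i Hi. rewrite app_nth2 by lia. rewrite app_nth1 by lia. f_equal. lia.
  - unfold apply_step. simpl. rewrite El, Er, firstn_app, Nat.sub_diag, firstn_O, app_nil_r,
      firstn_all, skipn_app, skipn_all2 by lia. simpl. rewrite skipn_app.
    replace (length x + length l - length x) with (length l) by lia.
    rewrite skipn_all, Nat.sub_diag. reflexivity.
Qed.

Fixpoint has_derivation (u : word) (k : nat) : Prop :=
  match k with 0 => True | S k => exists v, rstep Theta u v /\ has_derivation v k end.

Lemma has_derivation_le k : forall u j, has_derivation u k -> j <= k -> has_derivation u j.
Proof.
  induction k as [|k IH]; intros u j H Hj; destruct j; simpl in *; auto; try lia.
  destruct H as [v [Hv Hd]]. exists v. split; auto. apply IH; auto. lia.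
Qed.

Lemma rstep_finite u : exists l, forall v, rstep Theta u v -> In v l.
Proof.
  exists (flat_map (fun k => map (fun p => apply_step (k, p) u) (seq 0 (S (length u))))
                   (seq 0 (length Theta))).
  intros v H. apply rstep_step_ok in H as [k [p [Hok ->]]].
  apply step_ok_spec in Hok as [Hk [Hle _]].
  apply in_flat_map. exists k. split; [apply in_seq; lia|].
  apply in_map_iff. exists p. split; [reflexivity|]. apply in_seq. lia.
Qed.

Lemma unbounded_rstep u : (forall k, has_derivation u k) ->
  exists v, rstep Theta u v /\ forall k, has_derivation v k.
Proof.
  intros Hu. destruct (rstep_finite u) as [l Hl]. apply NNPP. intros Hno.
  assert (Hb : exists K, forall v, In v l -> rstep Theta u v -> ~ has_derivation v K).
  { clear Hl. induction l as [|a l [K HK]].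
    - exists 0. intros v [].
    - destruct (classic (rstep Theta u a /\ forall k, has_derivation a k)) as [Ha|Ha].
      { exfalso. eauto. }
      destruct (classic (rstep Theta u a)) as [Hr|Hr].
      + destruct (not_all_ex_not _ _ (fun H => Ha (conj Hr H))) as [ka Hka].
        exists (Nat.max ka K). intros v [<-|Hv] Huv Hd.
        * apply Hka. eapply has_derivation_le; eauto. lia.
        * apply (HK v Hv Huv). eapply has_derivation_le; eauto. lia.
      + exists K. intros v [<-|Hv]; [tauto|auto]. }
  destruct Hb as [K HK]. destruct (Hu (S K)) as [v [Hv Hd]]. apply (HK v); auto.
Qed.

Lemma bounded_derivations w0 : ~ infinite_derivation Theta w0 ->
  exists N, ~ has_derivation w0 N.
Proof.
  intros Hni. apply NNPP. intros Hall.
  set (P := fun u => forall k, has_derivation u k).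
  assert (HP0 : P w0). { intros k. apply NNPP. intros Hk. apply Hall. eauto. }
  set (next := fun u => epsilon (inhabits ([] : word)) (fun v => rstep Theta u v /\ P v)).
  assert (Hnext : forall u, P u -> rstep Theta u (next u) /\ P (next u))
    by (intros u Hu; apply epsilon_spec, unbounded_rstep, Hu).
  set (fw := fun n => Nat.iter n next w0).
  assert (Hfw : forall n, P (fw n)) by (induction n; [exact HP0 | apply (Hnext _ IHn)]).
  apply Hni. exists fw. split; [reflexivity|]. intros n. apply (Hnext _ (Hfw n)).
Qed.

Section Tree.

Variable w0 : word.

(** Derivations from [w0] are lists of steps, the last step first. *)
Fixpoint word_of (pi : list (nat * nat)) : word :=
  match pi with [] => w0 | st :: pi => apply_step st (word_of pi) end.

Fixpoint valid (pi : list (nat * nat)) : Prop :=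
  match pi with [] => True | st :: pi => valid pi /\ step_ok st (word_of pi) = true end.

Lemma valid_has_derivation pi : valid pi ->
  forall k, has_derivation (word_of pi) k -> has_derivation w0 (length pi + k).
Proof.
  induction pi as [|[k0 p0] pi IH]; intros Hv k Hd; [exact Hd|].
  destruct Hv as [Hv Hok].
  replace (length (_ :: pi) + k) with (length pi + S k) by (simpl; lia).
  apply IH; auto. exists (apply_step (k0, p0) (word_of pi)). split; auto.
  apply step_ok_rstep. auto.
Qed.

Lemma valid_length_lt N pi : ~ has_derivation w0 N -> valid pi -> length pi < N.
Proof.
  intros HN Hv. destruct (Nat.lt_ge_cases (length pi) N); auto. exfalso. apply HN.
  apply has_derivation_le with (length pi); auto. rewrite <- (Nat.add_0_r (length pi)).
  apply valid_has_derivation; simpl; auto.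
Qed.

Definition extensions (pi : list (nat * nat)) : list (list (nat * nat)) :=
  map (fun st => st :: pi) (filter (fun st => step_ok st (word_of pi))
    (flat_map (fun k => map (fun p => (k, p)) (seq 0 (S (length (word_of pi)))))
              (seq 0 (length Theta)))).

Fixpoint valid_of_length n : list (list (nat * nat)) :=
  match n with 0 => [[]] | S n => flat_map extensions (valid_of_length n) end.

Definition valid_below N := flat_map valid_of_length (seq 0 N).

Lemma valid_of_length_In n pi : In pi (valid_of_length n) <-> valid pi /\ length pi = n.
Proof.
  revert pi. induction n as [|n IH]; intros pi; simpl.
  - split; [intros [<-|[]]; simpl; auto|]. intros [_ H]. destruct pi; simpl in *; [auto|lia].
  - rewrite in_flat_map. split.
    + intros [pi0 [H0 H1]]. apply IH in H0 as [Hv Hl].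
      apply in_map_iff in H1 as [st [<- H1]]. apply filter_In in H1 as [_ H1]. simpl. auto.
    + intros [Hv Hl]. destruct pi as [|[k p] pi0]; simpl in *; [lia|].
      destruct Hv as [Hv Hok]. exists pi0. split; [apply IH; auto|].
      apply in_map_iff. exists (k, p). split; [reflexivity|]. apply filter_In. split; auto.
      apply step_ok_spec in Hok as [Hk [Hle _]]. apply in_flat_map. exists k.
      split; [apply in_seq; lia|]. apply in_map_iff. exists p. split; [reflexivity|].
      apply in_seq. lia.
Qed.

Lemma valid_below_In N pi : In pi (valid_below N) <-> valid pi /\ length pi < N.
Proof.
  unfold valid_below. rewrite in_flat_map. split.
  - intros [n [Hn H]]. apply in_seq in Hn. apply valid_of_length_In in H as [H1 H2].
    split; auto. lia.
  - intros [Hv Hl]. exists (length pi). split; [apply in_seq; lia|].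
    apply valid_of_length_In. auto.
Qed.

Lemma valid_child k p pi0 : valid ((k, p) :: pi0) ->
  let u := word_of pi0 in let u' := word_of ((k, p) :: pi0) in
  k < length Theta /\ p + length (lhs k) <= length u /\
  length u' = p + length (rhs k) + (length u - p - length (lhs k)) /\
  (forall i, i < length (lhs k) -> nth (p + i) u false = nth i (lhs k) false) /\
  (forall i, i < p -> nth i u' false = nth i u false) /\
  (forall j, j < length (rhs k) -> nth (p + j) u' false = nth j (rhs k) false) /\
  (forall j, j < length u - p - length (lhs k) ->
     nth (p + length (rhs k) + j) u' false = nth (p + length (lhs k) + j) u false).
Proof.
  intros [_ Hok] u u'. apply step_ok_spec in Hok as [Hk [Hle Hu]].
  change u' with (apply_step (k, p) u). unfold apply_step. simpl fst; simpl snd.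
  fold u in Hle, Hu. clearbody u. clear u'.
  set (n := length (lhs k)) in *. set (m := length (rhs k)).
  assert (Hx : length (firstn p u) = p) by (rewrite length_firstn; lia).
  assert (Hnth : forall (x l y : word) i, nth i (x ++ l ++ y) false =
     if i <? length x then nth i x false
     else if i <? length x + length l then nth (i - length x) l false
     else nth (i - length x - length l) y false).
  { intros x l y i. destruct (Nat.ltb_spec i (length x)); [apply app_nth1; auto|].
    rewrite app_nth2 by auto. destruct (Nat.ltb_spec i (length x + length l)).
    - apply app_nth1. lia.
    - rewrite app_nth2 by lia. f_equal; lia. }
  split; [exact Hk|]. split; [exact Hle|].
  split; [rewrite !length_app, length_skipn; fold m; lia|].
  split; [|split; [|split]].
  - intros i Hi. rewrite Hu, Hnth, Hx. fold n.
    destruct (Nat.ltb_spec (p + i) p); [lia|]. destruct (Nat.ltb_spec (p + i) (p + n)); [|lia].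
    f_equal. lia.
  - intros i Hi. rewrite Hnth, Hx. destruct (Nat.ltb_spec i p); [|lia].
    rewrite nth_firstn. destruct (Nat.ltb_spec i p); [auto|lia].
  - intros j Hj. rewrite Hnth, Hx. fold m.
    destruct (Nat.ltb_spec (p + j) p); [lia|]. destruct (Nat.ltb_spec (p + j) (p + m)); [|lia].
    f_equal. lia.
  - intros j Hj. rewrite Hnth, Hx. fold m.
    destruct (Nat.ltb_spec (p + m + j) p); [lia|].
    destruct (Nat.ltb_spec (p + m + j) (p + m)); [lia|].
    rewrite nth_skipn. f_equal. lia.
Qed.

Fixpoint code (pi : list (nat * nat)) : nat :=
  match pi with [] => 0 | st :: pi => S (Cantor.to_nat (Cantor.to_nat st, code pi)) end.

Lemma to_nat_inj a b : Cantor.to_nat a = Cantor.to_nat b -> a = b.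
Proof. intros H. rewrite <- (cancel_of_to a), <- (cancel_of_to b), H. auto. Qed.

Lemma code_inj pi pi' : code pi = code pi' -> pi = pi'.
Proof.
  revert pi'. induction pi as [|st pi IH]; intros [|st' pi'] H; try discriminate; auto.
  change (S (Cantor.to_nat (Cantor.to_nat st, code pi)) =
          S (Cantor.to_nat (Cantor.to_nat st', code pi'))) in H.
  apply eq_add_S, to_nat_inj in H. injection H as H1 H2.
  apply to_nat_inj in H1. subst. f_equal. auto.
Qed.

(** The null standing for position [i] of the word reached by the derivation [pi]. *)
Definition node (pi : list (nat * nat)) (i : nat) : term := Null (Cantor.to_nat (code pi, i)).

Lemma node_inj pi i pi' i' : node pi i = node pi' i' -> pi = pi' /\ i = i'.
Proof.
  unfold node. intros H.
  assert (E : Cantor.to_nat (code pi, i) = Cantor.to_nat (code pi', i')) by congruence.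
  apply to_nat_inj in E. injection E as H1 H2.
  split; auto. apply code_inj; auto.
Qed.

(** Firings planned for the child [(k, p) :: pi0] of the derivation [pi0]: the rule
    itself, the [L]-tgds copying the prefix before [p], and the [R]-tgds copying
    the suffix after the redex. *)
Inductive plan : Type :=
| PRule (k p : nat) (pi0 : list (nat * nat))
| PLeft (k p : nat) (pi0 : list (nat * nat)) (i : nat)
| PRight (k p : nat) (pi0 : list (nat * nat)) (j : nat).

Definition plan_parent (t : plan) :=
  match t with PRule _ _ pi0 | PLeft _ _ pi0 _ | PRight _ _ pi0 _ => pi0 end.

Definition plan_child (t : plan) :=
  match t with PRule k p pi0 | PLeft k p pi0 _ | PRight k p pi0 _ => (k, p) :: pi0 end.

Definition plan_assign (t : plan) : nat -> term :=
  match t with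
  | PRule k p pi0 => fun z => if z <=? length (lhs k) then node pi0 (p + z)
                              else node ((k, p) :: pi0) (p + (z - S (length (lhs k))))
  | PLeft k p pi0 i => fun z => match z with
                       | 0 => node pi0 i | 1 => node pi0 (S i) | 2 => node ((k, p) :: pi0) (S i)
                       | _ => node ((k, p) :: pi0) i end
  | PRight k p pi0 j => fun z => match z with
                        | 0 => node pi0 (p + length (lhs k) + j)
                        | 1 => node ((k, p) :: pi0) (p + length (rhs k) + j)
                        | 2 => node pi0 (S (p + length (lhs k) + j))
                        | _ => node ((k, p) :: pi0) (S (p + length (rhs k) + j)) end
  end.

Lemma plan_assign_rule_lo k p pi0 z : z <= length (lhs k) ->
  plan_assign (PRule k p pi0) z = node pi0 (p + z).
Proof. intros H. simpl. destruct (Nat.leb_spec z (length (lhs k))); [auto|lia]. Qed.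

Lemma plan_assign_rule_hi k p pi0 z : length (lhs k) < z ->
  plan_assign (PRule k p pi0) z = node ((k, p) :: pi0) (p + (z - S (length (lhs k)))).
Proof. intros H. simpl. destruct (Nat.leb_spec z (length (lhs k))); [lia|auto]. Qed.

Lemma is_evar_rule_lhs k x : k < length Theta ->
  is_evar (rule_tgd (lhs k, rhs k)) x ->
  S (length (lhs k)) <= x <= S (length (lhs k)) + length (rhs k).
Proof. intros Hk. apply is_evar_rule_tgd. apply (Hlhs _ (rhs k)). apply rule_In. auto. Qed.

Definition gap k p pi0 := length (word_of pi0) - p - length (lhs k).

Definition plan_tgd (t : plan) : tgd :=
  match t with
  | PRule k p pi0 => rule_tgd (lhs k, rhs k)
  | PLeft k p pi0 i => tgd_L (nth i (word_of pi0) false)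
  | PRight k p pi0 j => tgd_R (nth (p + length (lhs k) + j) (word_of pi0) false)
  end.

Definition plan_ok (t : plan) : Prop :=
  match t with
  | PRule k p pi0 => valid ((k, p) :: pi0)
  | PLeft k p pi0 i => valid ((k, p) :: pi0) /\ i < p
  | PRight k p pi0 j => valid ((k, p) :: pi0) /\ j < gap k p pi0
  end.

Lemma plan_ok_valid t : plan_ok t -> valid (plan_child t).
Proof. destruct t; simpl; tauto. Qed.

Section Bounded.

Variables N B : nat.
Hypothesis HN : ~ has_derivation w0 N.
Hypothesis HB : forall pi, valid pi -> length (word_of pi) <= B.

(** The firings for the child of [pi0] occur in the block of stages starting at
    [S (length pi0) * S B]: first the rule, then the [L]-copies from right to left
    and the [R]-copies from left to right.  Blocks are longer than words, so the
    [E]-atoms of [pi0] are all present before the block of its children. *)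
Definition plan_stage (t : plan) : nat :=
  match t with
  | PRule k p pi0 => S (length pi0) * S B
  | PLeft k p pi0 i => S (length pi0) * S B + (p - i)
  | PRight k p pi0 j => S (length pi0) * S B + S j
  end.

Definition plans : list plan :=
  flat_map (fun pi => match pi with
    | [] => []
    | (k, p) :: pi0 => PRule k p pi0 :: map (PLeft k p pi0) (seq 0 p) ++
                       map (PRight k p pi0) (seq 0 (gap k p pi0))
    end) (valid_below N).

Lemma plans_In t : In t plans <-> plan_ok t.
Proof.
  unfold plans. rewrite in_flat_map. split.
  - intros [pi [Hpi Ht]]. apply valid_below_In in Hpi as [Hv _].
    destruct pi as [|[k p] pi0]; [destruct Ht|].
    destruct Ht as [<-|Ht]; [exact Hv|]. apply in_app_iff in Ht as [Ht|Ht];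
    apply in_map_iff in Ht as [i [<- Hi]]; apply in_seq in Hi; split; auto; lia.
  - intros Ht. exists (plan_child t). split.
    { apply valid_below_In. split; [apply plan_ok_valid; auto|].
      apply valid_length_lt; auto. apply plan_ok_valid; auto. }
    destruct t as [k p pi0|k p pi0 i|k p pi0 j]; simpl in *.
    + left; auto.
    + right. apply in_app_iff. left. apply in_map. apply in_seq. lia.
    + right. apply in_app_iff. right. apply in_map. apply in_seq. lia.
Qed.

Lemma plan_stage_range t : In t plans ->
  S (length (plan_parent t)) * S B <= plan_stage t <= S (length (plan_parent t)) * S B + B.
Proof.
  intros Ht. apply plans_In in Ht. pose proof (plan_ok_valid t Ht) as Hv.
  destruct t as [k p pi0|k p pi0 i|k p pi0 j]; cbn [plan_child plan_ok plan_stage plan_parent] in *;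
  pose proof (valid_child _ _ _ Hv) as [_ [Hle _]]; pose proof (HB pi0 (proj1 Hv));
  unfold gap in *; lia.
Qed.

Lemma plan_stage_le t : In t plans -> plan_stage t <= N * S B.
Proof.
  intros Ht. pose proof (plan_stage_range t Ht) as Hr.
  apply plans_In, plan_ok_valid in Ht. apply (valid_length_lt N) in Ht; auto.
  destruct t; simpl in *; nia.
Qed.

Definition root : instance :=
  map (fun i => AE (node [] i) (Const (nth i w0 false)) (node [] (S i))) (seq 0 (length w0)).

Lemma root_In A : In A root <->
  exists i, i < length w0 /\ A = AE (node [] i) (Const (nth i w0 false)) (node [] (S i)).
Proof.
  unfold root. rewrite in_map_iff. split.
  - intros [i [<- Hi]]. apply in_seq in Hi. exists i. split; auto. lia.
  - intros [i [Hi ->]]. exists i. split; auto. apply in_seq. lia.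
Qed.

Definition tree : nat -> instance := stage root plans plan_stage plan_tgd plan_assign.

Definition plan_head t := map (asub (plan_assign t)) (Defs.head (plan_tgd t)).

Lemma tree_In L A : In A (tree L) <->
  In A root \/ exists t, In t plans /\ plan_stage t <= L /\ In A (plan_head t).
Proof.
  unfold tree. rewrite stage_In. apply or_iff_compat_l. unfold plan_head. split.
  - intros [t [b [Ht [Hl [Hb ->]]]]]. exists t. repeat split; auto. apply in_map. auto.
  - intros [t [Ht [Hl HA]]]. apply in_map_iff in HA as [b [<- Hb]]. exists t, b. auto.
Qed.

Lemma tree_of_plan L t A : In t plans -> plan_stage t <= L -> In A (plan_head t) ->
  In A (tree L).
Proof. intros Ht Hl HA. apply tree_In. right. eauto. Qed.

Lemma tree_mono L L' A : L <= L' -> In A (tree L) -> In A (tree L').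
Proof.
  rewrite !tree_In. intros Hl [H|[t [Ht [Htl HA]]]]; auto. right. exists t. repeat split; auto.
  lia.
Qed.

Definition tree_E pi a := AE (node pi a) (Const (nth a (word_of pi) false)) (node pi (S a)).
Definition tree_L k p pi0 i := AL (node pi0 i) (node ((k, p) :: pi0) i).
Definition tree_R k p pi0 j :=
  AR (node pi0 (p + length (lhs k) + j)) (node ((k, p) :: pi0) (p + length (rhs k) + j)).

Lemma plan_head_rule k p pi0 A : In A (plan_head (PRule k p pi0)) <->
  A = tree_L k p pi0 p \/
  (exists j, j < length (rhs k) /\
     A = AE (node ((k, p) :: pi0) (p + j)) (Const (nth j (rhs k) false))
            (node ((k, p) :: pi0) (S (p + j)))) \/
  A = tree_R k p pi0 0.
Proof.
  unfold plan_head. change (plan_tgd (PRule k p pi0)) with (rule_tgd (lhs k, rhs k)).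
  rewrite rule_tgd_eq. unfold Defs.head, snd.
  rewrite map_cons, map_app, map_cons. simpl map at 2.
  assert (E0 : asub (plan_assign (PRule k p pi0)) (AL (VV 0) (VV (S (length (lhs k)))))
               = tree_L k p pi0 p).
  { unfold asub, amap, vsub. rewrite plan_assign_rule_lo, plan_assign_rule_hi by lia.
    unfold tree_L. f_equal; f_equal; lia. }
  assert (E1 : asub (plan_assign (PRule k p pi0))
                 (AR (VV (length (lhs k))) (VV (S (length (lhs k)) + length (rhs k))))
               = tree_R k p pi0 0).
  { unfold asub, amap, vsub. rewrite plan_assign_rule_lo, plan_assign_rule_hi by lia.
    unfold tree_R. f_equal; f_equal; lia. }
  rewrite E0, E1. cbn [In]. rewrite in_app_iff, in_map_iff. cbn [In]. split.
  - intros [<-|[[b [<- Hb]]|[<-|[]]]]; auto. right. left.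
    apply path_atoms_In in Hb as [j [Hj ->]]. exists j. split; auto.
    unfold asub, amap, vsub. rewrite !plan_assign_rule_hi by lia. f_equal; f_equal; lia.
  - intros [<-|[[j [Hj ->]]|<-]]; auto. right. left.
    exists (AE (VV (S (length (lhs k)) + j)) (VC (nth j (rhs k) false))
               (VV (S (length (lhs k)) + S j))).
    split.
    + unfold asub, amap, vsub. rewrite !plan_assign_rule_hi by lia. f_equal; f_equal; lia.
    + apply path_atoms_In. eauto.
Qed.

Lemma plan_head_left k p pi0 i A : In A (plan_head (PLeft k p pi0 i)) <->
  A = tree_L k p pi0 i \/
  A = AE (node ((k, p) :: pi0) i) (Const (nth i (word_of pi0) false))
         (node ((k, p) :: pi0) (S i)).
Proof. unfold plan_head, tree_L. simpl. intuition. Qed.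

Lemma plan_head_right k p pi0 j A : In A (plan_head (PRight k p pi0 j)) <->
  A = AE (node ((k, p) :: pi0) (p + length (rhs k) + j))
         (Const (nth (p + length (lhs k) + j) (word_of pi0) false))
         (node ((k, p) :: pi0) (S (p + length (rhs k) + j))) \/
  A = AR (node pi0 (S (p + length (lhs k) + j)))
         (node ((k, p) :: pi0) (S (p + length (rhs k) + j))).
Proof. unfold plan_head. simpl. intuition. Qed.

Definition tree_atom (A : atom term) : Prop :=
  (exists pi a, valid pi /\ a < length (word_of pi) /\ A = tree_E pi a) \/
  (exists k p pi0 i, valid ((k, p) :: pi0) /\ i <= p /\ A = tree_L k p pi0 i) \/
  (exists k p pi0 j, valid ((k, p) :: pi0) /\ j <= gap k p pi0 /\ A = tree_R k p pi0 j).

Lemma tree_sound L A : In A (tree L) -> tree_atom A.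
Proof.
  intros H. apply tree_In in H as [H|[t [Ht [_ HA]]]].
  { apply root_In in H as [i [Hi ->]]. left. exists [], i. simpl. auto. }
  apply plans_In in Ht. pose proof (plan_ok_valid t Ht) as Hv.
  destruct t as [k p pi0|k p pi0 i|k p pi0 j]; simpl plan_child in Hv;
  pose proof (valid_child _ _ _ Hv) as [Hk [Hle [Hlen [Hl [Hx [Hr Hy]]]]]].
  - apply plan_head_rule in HA as [->|[[j [Hj ->]]| ->]].
    + right. left. exists k, p, pi0, p. auto.
    + left. exists ((k, p) :: pi0), (p + j). split; auto. split; [lia|].
      unfold tree_E. rewrite Hr; auto.
    + right. right. exists k, p, pi0, 0. split; auto. split; [lia|auto].
  - destruct Ht as [_ Hi]. apply plan_head_left in HA as [->| ->].
    + right. left. exists k, p, pi0, i. split; auto. split; [lia|auto].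
    + left. exists ((k, p) :: pi0), i. split; auto. split; [lia|].
      unfold tree_E. rewrite Hx; auto.
  - destruct Ht as [_ Hj]. unfold gap in Hj. apply plan_head_right in HA as [->| ->].
    + left. exists ((k, p) :: pi0), (p + length (rhs k) + j). split; auto. split; [lia|].
      unfold tree_E. rewrite Hy; auto.
    + right. right. exists k, p, pi0, (S j). split; auto. split; [unfold gap; lia|].
      unfold tree_R. f_equal; f_equal; lia.
Qed.

Lemma tree_L_In k p pi0 i : valid ((k, p) :: pi0) -> i <= p ->
  In (tree_L k p pi0 i) (tree (S (length pi0) * S B + (p - i))).
Proof.
  intros Hv Hi. destruct (Nat.eq_dec i p) as [->|Hne].
  - apply tree_of_plan with (PRule k p pi0); [apply plans_In; auto|simpl; lia|].
    apply plan_head_rule. auto.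
  - apply tree_of_plan with (PLeft k p pi0 i); [apply plans_In; split; auto; lia|simpl; lia|].
    apply plan_head_left. auto.
Qed.

Lemma tree_R_In k p pi0 j : valid ((k, p) :: pi0) -> j <= gap k p pi0 ->
  In (tree_R k p pi0 j) (tree (S (length pi0) * S B + j)).
Proof.
  intros Hv Hj. destruct j as [|j].
  - apply tree_of_plan with (PRule k p pi0); [apply plans_In; auto|simpl; lia|].
    apply plan_head_rule. auto.
  - apply tree_of_plan with (PRight k p pi0 j); [apply plans_In; split; auto; lia|simpl; lia|].
    apply plan_head_right. right. unfold tree_R. f_equal; f_equal; lia.
Qed.

Lemma tree_E_In pi a : valid pi -> a < length (word_of pi) ->
  In (tree_E pi a) (tree (length pi * S B + B)).
Proof.
  intros Hv Ha. destruct pi as [|[k p] pi0].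
  { apply tree_In. left. apply root_In. exists a. auto. }
  pose proof (valid_child _ _ _ Hv) as [Hk [Hle [Hlen [Hl [Hx [Hr Hy]]]]]].
  pose proof (HB _ (proj1 Hv)) as HB0. simpl length.
  destruct (Nat.lt_ge_cases a p) as [H1|H1].
  { apply tree_of_plan with (PLeft k p pi0 a); [apply plans_In; split; auto|simpl; lia|].
    apply plan_head_left. right. unfold tree_E. rewrite Hx; auto. }
  destruct (Nat.lt_ge_cases a (p + length (rhs k))) as [H2|H2].
  - apply tree_of_plan with (PRule k p pi0); [apply plans_In; auto|simpl; lia|].
    apply plan_head_rule. right. left. exists (a - p). split; [lia|].
    unfold tree_E. replace (p + (a - p)) with a by lia. rewrite <- Hr by lia.
    replace (p + (a - p)) with a by lia. reflexivity.
  - apply tree_of_plan with (PRight k p pi0 (a - p - length (rhs k)));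
      [apply plans_In; split; auto; unfold gap; lia|simpl; lia|].
    apply plan_head_right. left. unfold tree_E.
    replace (p + length (rhs k) + (a - p - length (rhs k))) with a by lia.
    rewrite <- Hy by lia.
    replace (p + length (rhs k) + (a - p - length (rhs k))) with a by lia. reflexivity.
Qed.

Lemma satisfied_by_plan L t h : In t plans -> plan_stage t <= L ->
  agree_on (body_vars (plan_tgd t)) h (plan_assign t) -> satisfied (tree L) (plan_tgd t) h.
Proof.
  intros Ht Hl Hag. exists (plan_assign t). split; auto. intros a Ha.
  apply tree_of_plan with t; auto. apply in_map. auto.
Qed.

Lemma tree_atom_E t1 c t3 : tree_atom (AE t1 c t3) ->
  exists pi a, valid pi /\ a < length (word_of pi) /\
   t1 = node pi a /\ c = Const (nth a (word_of pi) false) /\ t3 = node pi (S a).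
Proof.
  intros [[pi [a [Hv [Ha E]]]]|[[k [p [pi0 [i [_ [_ E]]]]]]|[k [p [pi0 [j [_ [_ E]]]]]]]];
    try discriminate.
  injection E as -> -> ->. exists pi, a. auto.
Qed.

Lemma tree_atom_L t1 t2 : tree_atom (AL t1 t2) ->
  exists k p pi0 i, valid ((k, p) :: pi0) /\ i <= p /\
    t1 = node pi0 i /\ t2 = node ((k, p) :: pi0) i.
Proof.
  intros [[pi [a [Hv [Ha E]]]]|[[k [p [pi0 [i [Hv [Hi E]]]]]]|[k [p [pi0 [j [_ [_ E]]]]]]]];
    try discriminate.
  injection E as -> ->. exists k, p, pi0, i. auto.
Qed.

Lemma tree_atom_R t1 t2 : tree_atom (AR t1 t2) ->
  exists k p pi0 j, valid ((k, p) :: pi0) /\ j <= gap k p pi0 /\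
    t1 = node pi0 (p + length (lhs k) + j) /\ t2 = node ((k, p) :: pi0) (p + length (rhs k) + j).
Proof.
  intros [[pi [a [Hv [Ha E]]]]|[[k [p [pi0 [i [_ [_ E]]]]]]|[k [p [pi0 [j [Hv [Hj E]]]]]]]];
    try discriminate.
  injection E as -> ->. exists k, p, pi0, j. auto.
Qed.

Lemma tree_E_path l h : l <> [] ->
  (forall j, j < length l -> tree_atom (AE (h j) (Const (nth j l false)) (h (S j)))) ->
  exists pi p, valid pi /\ p + length l <= length (word_of pi) /\
    (forall j, j <= length l -> h j = node pi (p + j)) /\
    (forall i, i < length l -> nth (p + i) (word_of pi) false = nth i l false).
Proof.
  intros Hl HE.
  assert (Hl0 : 0 < length l) by (destruct l; [congruence|simpl; lia]).
  destruct (tree_atom_E _ _ _ (HE 0 Hl0)) as [pi [p [Hv [Hp [E0 _]]]]].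
  assert (Hch : forall j, j < length l -> h j = node pi (p + j) ->
     nth (p + j) (word_of pi) false = nth j l false /\ p + j < length (word_of pi) /\
     h (S j) = node pi (p + S j)).
  { intros j Hj Ehj. destruct (tree_atom_E _ _ _ (HE j Hj)) as [pi' [a [_ [Ha [E1 [E2 E3]]]]]].
    rewrite Ehj in E1. apply node_inj in E1 as [<- <-]. injection E2 as E2.
    split; auto. split; auto. rewrite E3. f_equal. lia. }
  assert (Hall : forall j, j <= length l -> h j = node pi (p + j)).
  { induction j as [|j IH]; intros Hj.
    - rewrite E0. f_equal. lia.
    - apply (Hch j); [lia | apply IH; lia]. }
  exists pi, p. split; [exact Hv|]. split; [|split; [exact Hall|]].
  - destruct (Hch (length l - 1)) as [_ [H2 _]]; [lia | apply Hall; lia | lia].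
  - intros i Hi. apply Hch; auto. apply Hall. lia.
Qed.

Let full := tree (N * S B).

Lemma satisfied_by_plan_ok t h : plan_ok t ->
  agree_on (body_vars (plan_tgd t)) h (plan_assign t) -> satisfied full (plan_tgd t) h.
Proof.
  intros Ht Hag. apply plans_In in Ht.
  apply satisfied_by_plan; auto. apply plan_stage_le; auto.
Qed.

Lemma tree_satisfies_rule k h : k < length Theta ->
  (forall j, j < length (lhs k) -> tree_atom (AE (h j) (Const (nth j (lhs k) false)) (h (S j)))) ->
  satisfied full (rule_tgd (lhs k, rhs k)) h.
Proof.
  intros Hk HE.
  destruct (tree_E_path (lhs k) h) as [pi [p [Hv [Hle [Hall Hnth]]]]]; auto.
  { apply (Hlhs _ (rhs k)). apply rule_In. auto. }
  apply (satisfied_by_plan_ok (PRule k p pi)).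
  - split; auto. apply step_ok_of_nth; auto.
  - intros z Hz. change (plan_tgd (PRule k p pi)) with (rule_tgd (lhs k, rhs k)) in Hz.
    rewrite rule_body_vars, path_vars in Hz.
    rewrite plan_assign_rule_lo by lia. apply Hall. lia.
Qed.

Lemma tree_satisfies_L c h :
  (forall a, In a (body (tgd_L c)) -> tree_atom (asub h a)) -> satisfied full (tgd_L c) h.
Proof.
  intros Hb.
  destruct (tree_atom_E _ _ _ (Hb (AE (VV 0) (VC c) (VV 1)) ltac:(simpl; tauto)))
    as [pi [a [Hv [Ha [E0 [Ec E1]]]]]].
  destruct (tree_atom_L _ _ (Hb (AL (VV 1) (VV 2)) ltac:(simpl; tauto)))
    as [k [p [pi0 [i [Hvc [Hi [E1' E2]]]]]]].
  simpl in E0, E1, E1', E2. rewrite E1 in E1'. apply node_inj in E1' as [<- <-].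
  injection Ec as ->.
  apply (satisfied_by_plan_ok (PLeft k p pi a)); [split; auto; lia|].
  intros z Hz. simpl in Hz. simpl. destruct Hz as [<-|[<-|[<-|[<-|[]]]]]; auto.
Qed.

Lemma tree_satisfies_R c h :
  (forall a, In a (body (tgd_R c)) -> tree_atom (asub h a)) -> satisfied full (tgd_R c) h.
Proof.
  intros Hb.
  destruct (tree_atom_R _ _ (Hb (AR (VV 0) (VV 1)) ltac:(simpl; tauto)))
    as [k [p [pi0 [j [Hvc [Hj [E0 E1]]]]]]].
  destruct (tree_atom_E _ _ _ (Hb (AE (VV 0) (VC c) (VV 2)) ltac:(simpl; tauto)))
    as [pi [a [Hv [Ha [E0' [Ec E2]]]]]].
  simpl in E0, E1, E0', E2. rewrite E0 in E0'. apply node_inj in E0' as [<- <-].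
  injection Ec as ->.
  apply (satisfied_by_plan_ok (PRight k p pi0 j)); [split; auto; unfold gap in *; lia|].
  intros z Hz. simpl in Hz. simpl. destruct Hz as [<-|[<-|[<-|[<-|[]]]]]; auto.
Qed.

Lemma tree_is_model : is_model (Sigma_R Theta) full.
Proof.
  intros s h [Hs Hb].
  assert (Hsem : forall a, In a (body s) -> tree_atom (asub h a))
    by (intros a Ha; eapply tree_sound, Hb, Ha).
  apply Sigma_R_In in Hs as [[l [r [Hin ->]]]|[[c ->]|[c ->]]].
  - apply In_nth with (d := ([], [])) in Hin as [k [Hk Ek]].
    replace (l, r) with (lhs k, rhs k) in * by (unfold lhs, rhs, rule; rewrite Ek; auto).
    apply tree_satisfies_rule; auto. intros j Hj.
    apply (Hsem (AE (VV j) (VC (nth j (lhs k) false)) (VV (S j)))).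
    apply path_atoms_In. exists j. auto.
  - apply tree_satisfies_L. auto.
  - apply tree_satisfies_R. auto.
Qed.

Lemma tree_E_In_before pi a L : valid pi -> a < length (word_of pi) ->
  length pi * S B + B <= L -> In (tree_E pi a) (tree L).
Proof.
  intros Hv Ha HL. apply tree_mono with (length pi * S B + B); auto. apply tree_E_In; auto.
Qed.

Lemma plan_body_in_tree t : In t plans ->
  forall a, In a (body (plan_tgd t)) -> In (asub (plan_assign t) a) (tree (pred (plan_stage t))).
Proof.
  intros Ht. pose proof (plan_stage_range t Ht) as Hlv. apply plans_In in Ht.
  pose proof (plan_ok_valid t Ht) as Hvc.
  destruct t as [k p pi0|k p pi0 i|k p pi0 j]; simpl plan_child in Hvc;
  pose proof (valid_child _ _ _ Hvc) as [Hk [Hle [Hlen [Hlf [Hx [Hr Hy]]]]]];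
  pose proof (HB _ (proj1 Hvc)) as HB0; simpl plan_parent in Hlv; intros a Ha.
  - change (plan_tgd (PRule k p pi0)) with (rule_tgd (lhs k, rhs k)) in Ha.
    apply path_atoms_In in Ha as [i [Hi ->]].
    replace (asub _ _) with (tree_E pi0 (p + i)).
    + apply tree_E_In_before; [apply Hvc|lia|simpl in *; lia].
    + unfold asub, amap, vsub. rewrite !plan_assign_rule_lo by lia. unfold tree_E.
      rewrite Hlf by auto. f_equal; f_equal; lia.
  - destruct Ht as [_ Hi]. destruct Ha as [<-|[<-|[]]].
    + change (asub _ _) with (tree_E pi0 i).
      apply tree_E_In_before; [apply Hvc|lia|simpl in *; lia].
    + change (asub _ _) with (tree_L k p pi0 (S i)).
      apply tree_mono with (S (length pi0) * S B + (p - S i)); [simpl; lia|].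
      apply tree_L_In; auto.
  - destruct Ht as [_ Hj]. unfold gap in Hj. destruct Ha as [<-|[<-|[]]].
    + change (asub _ _) with (tree_R k p pi0 j).
      apply tree_mono with (S (length pi0) * S B + j); [simpl; lia|].
      apply tree_R_In; auto. unfold gap. lia.
    + change (asub _ _) with (tree_E pi0 (p + length (lhs k) + j)).
      apply tree_E_In_before; [apply Hvc|lia|simpl in *; lia].
Qed.

Definition plan_mentions (t : plan) (pi : list (nat * nat)) (q : nat) : Prop :=
  pi = plan_parent t \/
  (pi = plan_child t /\
   match t with
   | PRule k p _ => p <= q <= p + length (rhs k)
   | PLeft _ _ _ i => q = i \/ q = S i
   | PRight k p _ j => q = p + length (rhs k) + j \/ q = S (p + length (rhs k) + j)
   end).

Ltac node_inv := repeat match goal with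
  | H : node _ _ = node _ _ |- _ => apply node_inj in H as [? ?]
  | H : Const _ = node _ _ |- _ => discriminate H
  | H : node _ _ = Const _ |- _ => discriminate H
  | H : False |- _ => destruct H
  | H : _ \/ _ |- _ => destruct H
  end; subst.

Lemma occurs_tree L pi q : occurs (node pi q) (tree L) ->
  pi = [] \/ exists t, In t plans /\ plan_stage t <= L /\ plan_mentions t pi q.
Proof.
  intros [A [HA Hq]]. apply tree_In in HA as [HA|[t [Ht [Hl HA]]]].
  - apply root_In in HA as [i [Hi ->]]. simpl in Hq. left. node_inv; auto.
  - right. exists t. split; auto. split; auto. unfold plan_mentions.
    destruct t as [k p pi0|k p pi0 i|k p pi0 j]; simpl.
    + apply plan_head_rule in HA as [->|[[j [Hj ->]]| ->]]; unfold tree_L, tree_R in *;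
      simpl in Hq; node_inv; auto; right; split; auto; lia.
    + apply plan_head_left in HA as [->| ->]; unfold tree_L in *; simpl in Hq; node_inv; auto.
    + apply plan_head_right in HA as [->| ->]; simpl in Hq; node_inv; auto.
Qed.

(** The existential variable [x] of the plan [t] is sent to the [q]-th node of
    the child of [t]. *)
Definition evar_position (t : plan) (x q : nat) : Prop :=
  match t with
  | PRule k p _ => S (length (lhs k)) <= x <= S (length (lhs k)) + length (rhs k) /\
                   q = p + (x - S (length (lhs k)))
  | PLeft _ _ _ i => x = 3 /\ q = i
  | PRight k p _ j => x = 3 /\ q = S (p + length (rhs k) + j)
  end.

Lemma plan_evar_node t x : In t plans -> is_evar (plan_tgd t) x ->
  exists q, plan_assign t x = node (plan_child t) q /\ evar_position t x q.
Proof.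
  intros Ht Hx. apply plans_In in Ht. destruct t as [k p pi0|k p pi0 i|k p pi0 j].
  - pose proof (valid_child _ _ _ Ht) as [Hk _].
    apply is_evar_rule_lhs in Hx; auto.
    exists (p + (x - S (length (lhs k)))). split; [|simpl; auto].
    apply plan_assign_rule_hi. lia.
  - apply is_evar_tgd_L in Hx. subst. eexists. split; [reflexivity|]. simpl. auto.
  - apply is_evar_tgd_R in Hx. subst. eexists. split; [reflexivity|]. simpl. auto.
Qed.

Lemma plans_fresh t x : In t plans -> is_evar (plan_tgd t) x ->
  (exists n, plan_assign t x = Null n) /\ ~ occurs (plan_assign t x) (tree (pred (plan_stage t))).
Proof.
  intros Ht Hx. destruct (plan_evar_node t x Ht Hx) as [q [-> Hq]].
  split; [unfold node; eauto|]. intros Ho.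
  pose proof (plan_stage_range t Ht) as Hlv.
  apply occurs_tree in Ho as [E|[t' [Ht' [Hl' Hm]]]]; [destruct t; discriminate|].
  pose proof (plan_stage_range t' Ht') as Hlv'.
  apply plans_In in Ht, Ht'.
  destruct Hm as [Em|[Em Hm]].
  - assert (length (plan_parent t') = S (length (plan_parent t)))
      by (rewrite <- Em; destruct t; reflexivity). nia.
  - destruct t as [k p pi0|k p pi0 i|k p pi0 j], t' as [k' p' pi0'|k' p' pi0' i'|k' p' pi0' j'];
    simpl in Em; injection Em as <- <- <-; simpl in *; unfold gap in *;
    repeat match goal with H : _ /\ _ |- _ => destruct H end; lia.
Qed.

Lemma plans_unique_evar t t' x y : In t plans -> In t' plans ->
  is_evar (plan_tgd t) x -> is_evar (plan_tgd t') y -> plan_assign t x = plan_assign t' y ->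
  t = t' /\ x = y.
Proof.
  intros Ht Ht' Hx Hy E.
  destruct (plan_evar_node t x Ht Hx) as [q [Eq Hq]].
  destruct (plan_evar_node t' y Ht' Hy) as [q' [Eq' Hq']].
  rewrite Eq, Eq' in E. apply node_inj in E as [Ec <-].
  apply plans_In in Ht, Ht'.
  destruct t as [k p pi0|k p pi0 i|k p pi0 j], t' as [k' p' pi0'|k' p' pi0' i'|k' p' pi0' j'];
  simpl in Ec; injection Ec as <- <- <-; cbn [evar_position plan_ok] in *; unfold gap in *;
  repeat match goal with H : _ /\ _ |- _ => destruct H end; subst;
  try (exfalso; lia); split; auto; try f_equal; lia.
Qed.

Lemma plans_staged : staged_firings (Sigma_R Theta) root plans plan_stage plan_tgd plan_assign.
Proof.
  split; [|split].
  - intros t Ht. pose proof (plan_stage_range t Ht) as Hlv.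
    split; [|split; [simpl in Hlv; lia|exact (plan_body_in_tree t Ht)]].
    apply plans_In in Ht. destruct t; simpl.
    + apply rule_tgd_in_Sigma_R, rule_In. exact (proj1 (valid_child _ _ _ Ht)).
    + apply tgd_L_in_Sigma_R.
    + apply tgd_R_in_Sigma_R.
  - exact plans_fresh.
  - exact plans_unique_evar.
Qed.

Lemma I_word_from_In k w A : In A (I_word_from k w) ->
  exists i, i < length w /\ A = AE (Null (k + i)) (Const (nth i w false)) (Null (k + S i)).
Proof.
  revert k. induction w as [|b w IH]; intros k HA; simpl in HA; [tauto|].
  destruct HA as [<-|HA].
  - exists 0. simpl. split; [lia|]. f_equal; f_equal; lia.
  - destruct (IH (S k) HA) as [i [Hi ->]]. exists (S i). simpl. split; [lia|].
    f_equal; f_equal; lia.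
Qed.

(** The staged tree is a model receiving [I_word w0] that maps into the chase. *)
Lemma no_infinite_chase : ~ core_chase_infinite (Sigma_R Theta) (I_word w0).
Proof.
  intros [f [Hf0 Hst]].
  set (c0 := fun t => match t with Null n => Null (snd (Cantor.of_nat n)) | c => c end).
  assert (Hc0 : hom_into c0 root (f 0)).
  { split; [reflexivity|]. intros A HA. apply root_In in HA as [i [Hi ->]]. rewrite Hf0.
    change (In (AE (Null (snd (Cantor.of_nat (Cantor.to_nat (0, i))))) (Const (nth i w0 false))
                   (Null (snd (Cantor.of_nat (Cantor.to_nat (0, S i)))))) (I_word w0)).
    rewrite !cancel_of_to. apply (I_word_from_path 0 w0 i Hi). }
  destruct (stage_hom_into_chase _ _ _ _ _ _ _ plans_staged f c0 Hst Hc0 (N * S B)) as [g Hg].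
  set (a0 := fun t => match t with Null i => node [] i | c => c end).
  assert (Ha0 : hom_into a0 (f 0) full).
  { split; [reflexivity|]. intros A HA. rewrite Hf0 in HA.
    apply I_word_from_In in HA as [i [Hi ->]].
    apply tree_In. left. apply root_In. exists i. auto. }
  exact (model_not_hom_into_chase _ f _ a0 (N * S B) g tree_is_model Ha0 Hst Hg).
Qed.

End Bounded.

Lemma infinite_derivation_of_chase :
  core_chase_infinite (Sigma_R Theta) (I_word w0) -> infinite_derivation Theta w0.
Proof.
  intros Hc. apply NNPP. intros Hni. destruct (bounded_derivations w0 Hni) as [N HN].
  set (B := list_max (map (fun pi => length (word_of pi)) (valid_below N))).
  assert (HB : forall pi, valid pi -> length (word_of pi) <= B).
  { intros pi Hv. apply in_list_max, (in_map (fun pi => length (word_of pi))), valid_below_In.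
    split; auto. apply valid_length_lt; auto. }
  exact (no_infinite_chase N B HN HB Hc).
Qed.

End Tree.

End Rewriting.

Theorem theorem8 (Theta : rws)
  (Hlhs : forall l r, In (l, r) Theta -> l <> nil)
  (w0 : word) :
  core_chase_infinite (Sigma_R Theta) (I_word w0) <-> infinite_derivation Theta w0.
Proof.
  split.
  - apply infinite_derivation_of_chase. exact Hlhs.
  - apply infinite_chase_of_derivation. exact Hlhs.
Qed.
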